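(* Let $u,\phi_1,\dots,\phi_N$ be a solution of the $n$-th KdV equation with self-consistent sources of degree $N$ (with distinct constants $\lambda_1,\dots,\lambda_N$ and constant $\alpha$). Fix a constant $\eta$, and let $f_1$ satisfy the Lax pair $$f_{1,xx}+(\xi_1+u)f_1=0,\qquad f_{1,t}=Q^{(n,N)}f_1$$ with spectral parameter $\lambda=\xi_1$. For any $\psi$ satisfying the Lax pair $\psi_{xx}+(\lambda+u)\psi=0$, $\psi_t=Q^{(n,N)}\psi$ with spectral parameter $\lambda$ (and the same $\eta$), define the Darboux transformation $$\bar\psi=\psi_x-\frac{f_{1,x}}{f_1}\psi,\qquad \bar u=u+2\partial^2\ln f_1,\qquad \bar\phi_j=\frac{1}{\sqrt{\lambda_j-\xi_1}}\Big[\phi_{j,x}-\frac{f_{1,x}}{f_1}\phi_j\Big],\quad j=1,\dots,N.$$ Then $$\bar\psi_{xx}+(\lambda+\bar u)\bar\psi=0,\qquad \bar\psi_t=A^{(n)}(\bar u,\lambda)\bar\psi+\eta\bar\psi+\alpha\sum_{j=1}^N\bar\phi_j\,\partial^{-1}(\bar\phi_j\bar\psi),$$ and $\bar u,\bar\phi_1,\dots,\bar\phi_N$ satisfy the $n$-th KdV equation with self-consistent sources of degree $N$: $$\bar u_t=\partial\Big[-2b_{n+2}[\bar u]-2\alpha\sum_{j=1}^N\bar\phi_j^2\Big],\qquad \bar\phi_{j,xx}+(\lambda_j+\bar u)\bar\phi_j=0,\ j=1,\dots,N.$$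
   Context: Let $\partial=\partial/\partial x$ and $\partial^{-1}=\int_{-\infty}^x\cdot\,dx$, so $\partial\partial^{-1}=\partial^{-1}\partial=1$; all functions of $(x,t)$ are smooth and decay as $x\to-\infty$ sufficiently fast that all integrals $\partial^{-1}(\cdot)$ appearing converge (in particular products of eigenfunctions such as $\phi_j\psi$ decay at $x=-\infty$). For a potential $u(x,t)$ let $L=-\frac14\partial^2-u+\frac12\partial^{-1}u_x$, and define $b_0=0$, $b_1=1$, $b_{k+1}=Lb_k$ for $k\ge1$ (so $b_{k+1}=-\frac12L^{k-1}u$), $a_k=-\frac12 b_{k,x}$ for $k\ge0$; write $b_k[u]$ to indicate dependence on $u$. Fix an integer $n\ge0$ and write $t=t_n$. Define the differential operator $A^{(n)}(u,\lambda)=\sum_{i=0}^{n+1}(a_i+b_i\partial)\lambda^{n+1-i}$. The $n$-th KdV equation with self-consistent sources of degree $N$ (constant $\alpha$, distinct constants $\lambda_j$) is the system $u_t=\partial\big[-2b_{n+2}[u]-2\alpha\sum_{j=1}^N\phi_j^2\big]$, $\phi_{j,xx}+(\lambda_j+u)\phi_j=0$, $j=1,\dots,N$. For a constant $\eta$ and spectral parameter $\lambda$, $Q^{(n,N)}$ denotes the operator $Q^{(n,N)}\psi=A^{(n)}(u,\lambda)\psi+\eta\psi+\alpha\sum_{j=1}^N\phi_j\,\partial^{-1}(\phi_j\psi)$. *)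

(* Functions of (x,t) are complex valued:
   fn := R -> R -> C  with argument order  f x t. *)
From Stdlib Require Import Reals.
From Coquelicot Require Export Coquelicot.

Open Scope C_scope.

Definition fn := R -> R -> C.

Definition Dr (g : R -> C) (x : R) : C :=
  (Derive (fun y => fst (g y)) x, Derive (fun y => snd (g y)) x).

Definition dx (f : fn) : fn := fun x t => Dr (fun y => f y t) x.
Definition dt (f : fn) : fn := fun x t => Dr (fun s => f x s) t.

(* \partial^{-1} f (x,t) = \int_{-\infty}^x f(y,t) dy (improper Riemann integral) *)
Definition pinv (f : fn) : fn :=
  fun x t => @RInt_gen C_R_CompleteNormedModule (fun y => f y t) (Rbar_locally m_infty) (at_point x).

Definition pinv_conv (f : fn) : Prop :=
  forall x t, @ex_RInt_gen C_R_NormedModule (fun y => f y t) (Rbar_locally m_infty) (at_point x).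

Fixpoint iterD (s : list bool) (f : fn) : fn :=
  match s with
  | nil => f
  | cons b s' => (if b then dt else dx) (iterD s' f)
  end.

Definition smooth (f : fn) : Prop :=
  forall s, forall x t,
    ex_derive (fun y => fst (iterD s f y t)) x /\
    ex_derive (fun y => snd (iterD s f y t)) x /\
    ex_derive (fun r => fst (iterD s f x r)) t /\
    ex_derive (fun r => snd (iterD s f x r)) t /\
    continuity_2d_pt (fun a b => fst (iterD s f a b)) x t /\
    continuity_2d_pt (fun a b => snd (iterD s f a b)) x t.

Definition decays (f : fn) : Prop :=
  forall s t,
    is_lim (fun x => fst (iterD s f x t)) m_infty 0%R /\
    is_lim (fun x => snd (iterD s f x t)) m_infty 0%R.

Definition cst (c : C) : fn := fun _ _ => c.

Fixpoint csum (n : nat) (F : nat -> C) : C :=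
  match n with
  | O => 0
  | S m => csum m F + F m
  end.

Fixpoint cpow (z : C) (k : nat) : C :=
  match k with
  | O => 1
  | S m => z * cpow z m
  end.

Definition Lop (u b : fn) : fn :=
  fun x t => - (1/4) * dx (dx b) x t - u x t * b x t
             + (1/2) * pinv (fun y s => dx u y s * b y s) x t.

Fixpoint bseq (u : fn) (k : nat) : fn :=
  match k with
  | O => cst 0
  | S k' => match k' with
            | O => cst 1
            | S _ => Lop u (bseq u k')
            end
  end.

Definition aseq (u : fn) (k : nat) : fn := fun x t => - (1/2) * dx (bseq u k) x t.

Definition Aop (n : nat) (u : fn) (lam : C) (psi : fn) : fn :=
  fun x t => csum (n + 2)
    (fun i => (aseq u i x t * psi x t + bseq u i x t * dx psi x t)
              * cpow lam (n + 1 - i)).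

(* Q^{(n,N)} psi = A^{(n)}(u,lam) psi + eta psi + alpha sum_j phi_j d^{-1}(phi_j psi);
   the sources are phi 0, ..., phi (N-1) *)
Definition Qop (n N : nat) (alpha eta : C) (u : fn) (phi : nat -> fn)
  (lam : C) (psi : fn) : fn :=
  fun x t => Aop n u lam psi x t + eta * psi x t
    + alpha * csum N (fun j => phi j x t * pinv (fun y s => phi j y s * psi y s) x t).

Definition KdVSCS (n N : nat) (alpha : C) (lams : nat -> C) (u : fn) (phi : nat -> fn) : Prop :=
  (forall x t, dt u x t =
     dx (fun y s => - 2 * bseq u (n + 2) y s
                    - 2 * alpha * csum N (fun j => phi j y s * phi j y s)) x t) /\
  (forall j, (j < N)%nat -> forall x t,
     dx (dx (phi j)) x t + (lams j + u x t) * phi j x t = 0).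

Definition LaxPair (n N : nat) (alpha eta : C) (u : fn) (phi : nat -> fn)
  (lam : C) (psi : fn) : Prop :=
  (forall x t, dx (dx psi) x t + (lam + u x t) * psi x t = 0) /\
  (forall x t, dt psi x t = Qop n N alpha eta u phi lam psi x t).

Definition dbar (f1 g : fn) : fn := fun x t => dx g x t - (dx f1 x t / f1 x t) * g x t.
(* u + 2 d^2 ln f1 = u + 2 d (f1_x / f1) *)
Definition ubar (u f1 : fn) : fn :=
  fun x t => u x t + 2 * dx (fun y s => dx f1 y s / f1 y s) x t.
(* phibar_j = (1 / r_j) [phi_{j,x} - f1_x/f1 phi_j], r_j a square root of lam_j - xi1 *)
Definition phibar (f1 : fn) (r : nat -> C) (phi : nat -> fn) (j : nat) : fn :=
  fun x t => / r j * dbar f1 (phi j) x t.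

(* Fix t; everything becomes an identity between functions of x.  Put g = f1_x / f1.  The
   Schroedinger equation for f1 gives the Riccati equation g' = -xi1 - u - g^2, hence
   ubar = -u - 2 xi1 - 2 g^2 and psibar = psi' - g psi solves the Schroedinger equation with
   potential ubar.  The Lenard sequence of ubar is b_i[u] + d_i with d_0 = 0 and
   d_(i+1) = xi1 d_i - ((-xi1 - u - g^2) b_i + g b_i' - b_i''/2), because each nonlocal term
   pinv(ubar_x (b_i + d_i)) has an explicit primitive vanishing at -oo.  This needs the
   asymptotics of g: convergence of pinv(ubar_x) makes ubar converge at -oo, so g is bounded,
   and as g' = (ubar + u)/2 tends to half that limit while g stays bounded, the limit is 0;
   bootstrapping the Riccati equation then controls every derivative of g.  The source
   integrals are Wronskians: pinv(phi_j f1) = W(phi_j, f1) / (lambda_j - xi1) and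
   (lambda_j - lambda) pinv(phi_j psi) = W(phi_j, psi).  With these closed forms the
   t-derivatives of psibar and ubar (after exchanging d_t and d_x) reduce to algebraic
   identities, in which the sum over i telescopes. *)

From Stdlib Require Import Reals Lra Lia FunctionalExtensionality List.
From Coquelicot Require Import Coquelicot.
Open Scope C_scope.

(** * Derivatives of complex-valued functions of a real variable *)

Lemma is_derive_Rmult (f g : R -> R) x df dg :
  is_derive f x df -> is_derive g x dg ->
  is_derive (fun y => f y * g y)%R x (df * g x + f x * dg)%R.
Proof.
  intros Hf Hg.
  replace (df * g x + f x * dg)%R with (plus (mult df (g x)) (mult (f x) dg))
    by (unfold plus, mult; simpl; ring).
  exact (is_derive_mult f g x df dg Hf Hg (fun _ _ => Rmult_comm _ _)).
Qed.

Lemma is_derive_Rinv (f : R -> R) x df :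
  is_derive f x df -> f x <> 0%R -> is_derive (fun y => / f y)%R x (- df / (f x * f x))%R.
Proof.
  intros Hf Hnz.
  replace (- df / (f x * f x))%R with (scal (opp df) (/ (f x ^ 2)))%R
    by (unfold scal, opp; simpl; unfold mult; simpl; field; exact Hnz).
  exact (is_derive_inv f x df Hf Hnz).
Qed.

Definition is_Cderive (h h' : R -> C) : Prop := forall x,
  is_derive (fun y => fst (h y)) x (fst (h' x)) /\
  is_derive (fun y => snd (h y)) x (snd (h' x)).

Definition ex_Cderive (h : R -> C) : Prop := forall x,
  ex_derive (fun y => fst (h y)) x /\ ex_derive (fun y => snd (h y)) x.

Lemma is_Cderive_Dr h h' : is_Cderive h h' -> forall x, Dr h x = h' x.
Proof.
  intros H x. destruct (H x) as [H1 H2]. unfold Dr.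
  transitivity (fst (h' x), snd (h' x)); [|destruct (h' x); reflexivity].
  f_equal; apply is_derive_unique; auto.
Qed.

Lemma is_Cderive_Dr_fun h h' : is_Cderive h h' -> Dr h = h'.
Proof. intros H; apply functional_extensionality; apply is_Cderive_Dr; auto. Qed.

Lemma ex_Cderive_correct h : ex_Cderive h -> is_Cderive h (Dr h).
Proof. intros H x. destruct (H x) as [H1 H2]. split; apply Derive_correct; auto. Qed.

Lemma is_Cderive_ex h d : is_Cderive h d -> ex_Cderive h.
Proof. intros H x; destruct (H x); split; eexists; eauto. Qed.

Lemma is_Cderive_ext h d d' : is_Cderive h d -> (forall x, d x = d' x) -> is_Cderive h d'.
Proof. intros H E x. rewrite <- E. apply H. Qed.

Lemma is_Cderive_ext_l h h2 d : is_Cderive h d -> (forall x, h x = h2 x) -> is_Cderive h2 d.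
Proof. intros H E. replace h2 with h; auto. apply functional_extensionality; auto. Qed.

Lemma is_Cderive_const (c : C) : is_Cderive (fun _ => c) (fun _ => 0).
Proof. intros x; split; apply (is_derive_const (K := R_AbsRing) (V := R_NormedModule)). Qed.

Lemma is_Cderive_plus a b a' b' : is_Cderive a a' -> is_Cderive b b' ->
  is_Cderive (fun x => a x + b x) (fun x => a' x + b' x).
Proof. intros H1 H2 x; destruct (H1 x), (H2 x); split; apply @is_derive_plus; auto. Qed.

Lemma is_Cderive_opp a a' : is_Cderive a a' -> is_Cderive (fun x => - a x) (fun x => - a' x).
Proof. intros H1 x; destruct (H1 x); split; apply @is_derive_opp; auto. Qed.

Lemma is_Cderive_minus a b a' b' : is_Cderive a a' -> is_Cderive b b' ->
  is_Cderive (fun x => a x - b x) (fun x => a' x - b' x).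
Proof. intros H1 H2. apply is_Cderive_plus; auto. apply is_Cderive_opp; auto. Qed.

Lemma is_Cderive_mult a b a' b' : is_Cderive a a' -> is_Cderive b b' ->
  is_Cderive (fun x => a x * b x) (fun x => a' x * b x + a x * b' x).
Proof.
  intros H1 H2 x; destruct (H1 x) as [A1 A2], (H2 x) as [B1 B2]; split; simpl.
  - replace (fst (a' x) * fst (b x) - snd (a' x) * snd (b x)
             + (fst (a x) * fst (b' x) - snd (a x) * snd (b' x)))%R
      with ((fst (a' x) * fst (b x) + fst (a x) * fst (b' x))
            + - (snd (a' x) * snd (b x) + snd (a x) * snd (b' x)))%R by ring.
    apply @is_derive_plus; [|apply @is_derive_opp]; apply is_derive_Rmult; auto.
  - replace (fst (a' x) * snd (b x) + snd (a' x) * fst (b x)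
             + (fst (a x) * snd (b' x) + snd (a x) * fst (b' x)))%R
      with ((fst (a' x) * snd (b x) + fst (a x) * snd (b' x))
            + (snd (a' x) * fst (b x) + snd (a x) * fst (b' x)))%R by ring.
    apply @is_derive_plus; apply is_derive_Rmult; auto.
Qed.

Lemma is_Cderive_inv a a' : is_Cderive a a' -> (forall x, a x <> 0) ->
  is_Cderive (fun x => / a x) (fun x => - a' x / (a x * a x)).
Proof.
  intros H1 Hnz x; destruct (H1 x) as [A1 A2].
  set (N := fun y => (fst (a y) * fst (a y) + snd (a y) * snd (a y))%R).
  assert (HN : N x <> 0%R).
  { intros E. apply (Hnz x). unfold N in E. destruct (a x) as [p q]; simpl in *.
    assert (p = 0%R) by nra. assert (q = 0%R) by nra. subst. reflexivity. }
  (* [field] below needs |a x * a x|^2 = |a x|^4 <> 0. *)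
  assert (HN2 : forall p q, (p * p + q * q)%R <> 0%R ->
            ((p * p - q * q) * (p * p - q * q) + (p * q + q * p) * (p * q + q * p))%R <> 0%R).
  { intros p q Hpq E. apply Hpq.
    replace ((p*p-q*q)*(p*p-q*q) + (p*q+q*p)*(p*q+q*p))%R
      with ((p*p+q*q)*(p*p+q*q))%R in E by ring.
    apply Rmult_integral in E. tauto. }
  set (dN := (2 * (fst (a' x) * fst (a x) + snd (a' x) * snd (a x)))%R).
  assert (DN : is_derive N x dN).
  { replace dN with ((fst (a' x) * fst (a x) + fst (a x) * fst (a' x))
                     + (snd (a' x) * snd (a x) + snd (a x) * snd (a' x)))%R
      by (unfold dN; ring).
    apply @is_derive_plus; apply is_derive_Rmult; auto. }
  split.
  - apply (is_derive_ext (fun y => fst (a y) * / N y)%R).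
    { intro y. simpl. unfold Rdiv, N. f_equal. f_equal. ring. }
    replace (fst (- a' x / (a x * a x)))
      with (fst (a' x) * / N x + fst (a x) * (- dN / (N x * N x)))%R.
    + apply (is_derive_Rmult (fun y => fst (a y)) (fun y => / N y)%R); [auto | apply is_derive_Rinv; auto].
    + unfold dN, N in *; destruct (a x) as [p q], (a' x) as [p' q']; simpl in *.
      field. auto.
  - apply (is_derive_ext (fun y => - snd (a y) * / N y)%R).
    { intro y. simpl. unfold Rdiv, N. f_equal. f_equal. ring. }
    replace (snd (- a' x / (a x * a x)))
      with (- snd (a' x) * / N x + - snd (a x) * (- dN / (N x * N x)))%R.
    + apply (is_derive_Rmult (fun y => - snd (a y)) (fun y => / N y))%R;
        [apply @is_derive_opp; auto | apply is_derive_Rinv; auto].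
    + unfold dN, N in *; destruct (a x) as [p q], (a' x) as [p' q']; simpl in *.
      field. auto.
Qed.

Ltac Cderive_step := match goal with
  | |- is_Cderive (fun x => ?c) _ => apply (is_Cderive_const c)
  | |- is_Cderive (fun x => @?a x + @?b x) _ => apply (is_Cderive_plus a b)
  | |- is_Cderive (fun x => @?a x - @?b x) _ => apply (is_Cderive_minus a b)
  | |- is_Cderive (fun x => - @?a x) _ => apply (is_Cderive_opp a)
  | |- is_Cderive (fun x => @?a x * @?b x) _ => apply (is_Cderive_mult a b)
  | |- _ => eassumption
  end.
Ltac auto_Cderive := repeat Cderive_step.

Lemma Dr_plus a b : ex_Cderive a -> ex_Cderive b ->
  Dr (fun x => a x + b x) = (fun x => Dr a x + Dr b x).
Proof. intros; apply is_Cderive_Dr_fun, is_Cderive_plus; apply ex_Cderive_correct; auto. Qed.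

Lemma Dr_mult a b : ex_Cderive a -> ex_Cderive b ->
  Dr (fun x => a x * b x) = (fun x => Dr a x * b x + a x * Dr b x).
Proof. intros; apply is_Cderive_Dr_fun, is_Cderive_mult; apply ex_Cderive_correct; auto. Qed.

Lemma Dr_const (c : C) : Dr (fun _ => c) = (fun _ => 0).
Proof. apply is_Cderive_Dr_fun, is_Cderive_const. Qed.

Lemma ex_Cderive_plus a b : ex_Cderive a -> ex_Cderive b -> ex_Cderive (fun x => a x + b x).
Proof. intros; eapply is_Cderive_ex, is_Cderive_plus; apply ex_Cderive_correct; eauto. Qed.

Lemma ex_Cderive_mult a b : ex_Cderive a -> ex_Cderive b -> ex_Cderive (fun x => a x * b x).
Proof. intros; eapply is_Cderive_ex, is_Cderive_mult; apply ex_Cderive_correct; eauto. Qed.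

Fixpoint Dr_n (m : nat) (h : R -> C) : R -> C :=
  match m with O => h | S m' => Dr_n m' (Dr h) end.

Lemma Dr_n_S m : forall h, Dr_n (S m) h = Dr (Dr_n m h).
Proof. induction m; intros h; simpl; auto. rewrite <- IHm. reflexivity. Qed.

Lemma Dr_n_const m (c : C) : Dr_n m (fun _ => c) = fun _ => match m with O => c | _ => 0 end.
Proof.
  destruct m as [|m]; simpl; auto. rewrite Dr_const.
  induction m; simpl; auto. rewrite Dr_const. auto.
Qed.

Lemma Dr_n_plus k : forall a b, (forall j, (j < k)%nat -> ex_Cderive (Dr_n j a)) ->
  (forall j, (j < k)%nat -> ex_Cderive (Dr_n j b)) ->
  Dr_n k (fun x => a x + b x) = (fun x => Dr_n k a x + Dr_n k b x).
Proof.
  induction k; intros a b Ha Hb; simpl; auto.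
  rewrite Dr_plus by (apply (Ha 0%nat) || apply (Hb 0%nat); lia).
  apply IHk; intros j Hj; [apply (Ha (S j)) | apply (Hb (S j))]; lia.
Qed.

Definition upto (P : (R -> C) -> Prop) (m : nat) (h : R -> C) : Prop :=
  forall j, (j <= m)%nat -> ex_Cderive (Dr_n j h) /\ P (Dr_n j h).

Lemma upto_plus P (HP : forall p q, P p -> P q -> P (fun x => p x + q x)) m a b :
  upto P m a -> upto P m b -> upto P m (fun x => a x + b x).
Proof.
  intros Ha Hb j Hj. rewrite Dr_n_plus.
  - destruct (Ha j Hj), (Hb j Hj). split; [apply ex_Cderive_plus|apply HP]; auto.
  - intros; apply Ha; lia.
  - intros; apply Hb; lia.
Qed.

(* Leibniz rule: the j-th derivative of a b is a sum of products of derivatives of order <= j. *)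
Lemma upto_mult (Pa Pb Pc : (R -> C) -> Prop) :
  (forall a b, Pa a -> Pb b -> Pc (fun x => a x * b x)) ->
  (forall p q, Pc p -> Pc q -> Pc (fun x => p x + q x)) ->
  forall k a b, upto Pa k a -> upto Pb k b -> upto Pc k (fun x => a x * b x).
Proof.
  intros Hm Hp. induction k; intros a b Ha Hb j Hj.
  - assert (j = 0%nat) by lia; subst. simpl.
    destruct (Ha 0%nat) as [A1 A2]; [lia|]. destruct (Hb 0%nat) as [B1 B2]; [lia|].
    split; [apply ex_Cderive_mult|apply Hm]; auto.
  - destruct (Ha 0%nat) as [A1 A2]; [lia|]. destruct (Hb 0%nat) as [B1 B2]; [lia|].
    destruct j as [|j]; simpl.
    + split; [apply ex_Cderive_mult|apply Hm]; auto.
    + rewrite Dr_mult by auto.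
      apply (upto_plus Pc Hp k); [apply IHk | apply IHk | lia]; intros i Hi.
      * apply (Ha (S i)); lia.
      * apply Hb; lia.
      * apply Ha; lia.
      * apply (Hb (S i)); lia.
Qed.

Lemma upto_const P (HC : forall c, P (fun _ => c)) m c : upto P m (fun _ => c).
Proof. intros j Hj. rewrite Dr_n_const. split; [apply (is_Cderive_ex _ _ (is_Cderive_const _))|apply HC]. Qed.

Definition Csmooth (h : R -> C) : Prop := forall m, ex_Cderive (Dr_n m h).

Lemma Csmooth_upto h : Csmooth h <-> forall m, upto (fun _ => True) m h.
Proof. split; intros H m; [intros j _; split; auto | apply (H m m); lia]. Qed.

Lemma Csmooth_mult a b : Csmooth a -> Csmooth b -> Csmooth (fun x => a x * b x).
Proof.
  rewrite !Csmooth_upto. intros Ha Hb m.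
  apply (upto_mult (fun _ => True) (fun _ => True)); auto.
Qed.

Lemma Csmooth_plus a b : Csmooth a -> Csmooth b -> Csmooth (fun x => a x + b x).
Proof. intros Ha Hb m. rewrite Dr_n_plus by auto. apply ex_Cderive_plus; auto. Qed.

Lemma Csmooth_const c : Csmooth (fun _ => c).
Proof. intros m; rewrite Dr_n_const. apply (is_Cderive_ex _ _ (is_Cderive_const _)). Qed.

Lemma Csmooth_scal c a : Csmooth a -> Csmooth (fun x => c * a x).
Proof. intros; apply Csmooth_mult; auto; apply Csmooth_const. Qed.

Lemma Csmooth_opp a : Csmooth a -> Csmooth (fun x => - a x).
Proof.
  intros H. replace (fun x => - a x) with (fun x => (-1) * a x).
  - apply Csmooth_scal; auto.
  - apply functional_extensionality; intros; ring.
Qed.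

Lemma Csmooth_minus a b : Csmooth a -> Csmooth b -> Csmooth (fun x => a x - b x).
Proof. intros; apply Csmooth_plus; auto; apply Csmooth_opp; auto. Qed.

Lemma Csmooth_Dr a : Csmooth a -> Csmooth (Dr a).
Proof. intros H m. exact (H (S m)). Qed.

Lemma Csmooth_is_Cderive_Dr a : Csmooth a -> is_Cderive a (Dr a).
Proof. intros H. apply ex_Cderive_correct, (H 0%nat). Qed.

Lemma Csmooth_of_is_Cderive a d : is_Cderive a d -> Csmooth d -> Csmooth a.
Proof.
  intros H1 H2 [|m]; [apply (is_Cderive_ex _ _ H1)|].
  simpl. rewrite (is_Cderive_Dr_fun _ _ H1). apply H2.
Qed.

(** * Behaviour at -oo *)

Definition vanishing (h : R -> C) : Prop :=
  forall eps, (0 < eps)%R -> exists X, forall x, (x < X)%R -> (Cmod (h x) < eps)%R.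

Definition bounded (h : R -> C) : Prop :=
  exists M X, forall x, (x < X)%R -> (Cmod (h x) <= M)%R.

Lemma Rmin_lt x a b : (x < Rmin a b)%R -> (x < a)%R /\ (x < b)%R.
Proof. intros H; pose proof (Rmin_l a b); pose proof (Rmin_r a b); split; lra. Qed.

Lemma vanishing_bounded h : vanishing h -> bounded h.
Proof. intros H. destruct (H 1%R Rlt_0_1) as [X HX]. exists 1%R, X. intros; apply Rlt_le; auto. Qed.

Lemma bounded_const c : bounded (fun _ => c).
Proof. exists (Cmod c), 0%R. intros; lra. Qed.

Lemma bounded_pos h : bounded h -> exists M X, (0 < M)%R /\ forall x, (x < X)%R -> (Cmod (h x) <= M)%R.
Proof.
  intros [M [X H]]. exists (Rabs M + 1)%R, X. split; [pose proof (Rabs_pos M); lra|].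
  intros x Hx. specialize (H x Hx). pose proof (Rle_abs M). lra.
Qed.

Lemma vanishing_plus a b : vanishing a -> vanishing b -> vanishing (fun x => a x + b x).
Proof.
  intros Ha Hb e He. destruct (Ha (e/2)%R) as [X1 H1]; [lra|]. destruct (Hb (e/2)%R) as [X2 H2]; [lra|].
  exists (Rmin X1 X2). intros x Hx. pose proof (Cmod_triangle (a x) (b x)).
  destruct (Rmin_lt _ _ _ Hx) as [Hx1 Hx2].
  specialize (H1 x Hx1); specialize (H2 x Hx2). lra.
Qed.

Lemma bounded_plus a b : bounded a -> bounded b -> bounded (fun x => a x + b x).
Proof.
  intros [M1 [X1 H1]] [M2 [X2 H2]]. exists (M1 + M2)%R, (Rmin X1 X2). intros x Hx.
  pose proof (Cmod_triangle (a x) (b x)).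
  destruct (Rmin_lt _ _ _ Hx) as [Hx1 Hx2].
  specialize (H1 x Hx1); specialize (H2 x Hx2). lra.
Qed.

Lemma bounded_mult a b : bounded a -> bounded b -> bounded (fun x => a x * b x).
Proof.
  intros Ha Hb. destruct (bounded_pos _ Ha) as [M1 [X1 [P1 H1]]].
  destruct (bounded_pos _ Hb) as [M2 [X2 [P2 H2]]].
  exists (M1 * M2)%R, (Rmin X1 X2). intros x Hx. rewrite Cmod_mult.
  destruct (Rmin_lt _ _ _ Hx) as [Hx1 Hx2].
  specialize (H1 x Hx1); specialize (H2 x Hx2).
  apply Rmult_le_compat; auto using Cmod_ge_0.
Qed.

Lemma vanishing_mult_l a b : bounded a -> vanishing b -> vanishing (fun x => a x * b x).
Proof.
  intros Ha Hb e He. destruct (bounded_pos _ Ha) as [M1 [X1 [P1 H1]]].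
  destruct (Hb (e / M1)%R) as [X2 H2]; [apply Rdiv_lt_0_compat; auto|].
  exists (Rmin X1 X2). intros x Hx. rewrite Cmod_mult.
  destruct (Rmin_lt _ _ _ Hx) as [Hx1 Hx2].
  specialize (H1 x Hx1); specialize (H2 x Hx2).
  apply Rle_lt_trans with (M1 * Cmod (b x))%R; [apply Rmult_le_compat_r; auto using Cmod_ge_0|].
  replace e with (M1 * (e / M1))%R by (field; lra). apply Rmult_lt_compat_l; auto.
Qed.

Lemma vanishing_mult_r a b : vanishing a -> bounded b -> vanishing (fun x => a x * b x).
Proof.
  intros Ha Hb. replace (fun x => a x * b x) with (fun x => b x * a x).
  - apply vanishing_mult_l; auto.
  - apply functional_extensionality; intros; ring.
Qed.

Lemma vanishing_ext a b : vanishing a -> (forall x, a x = b x) -> vanishing b.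
Proof. intros H E e He. destruct (H e He) as [X HX]. exists X; intros; rewrite <- E; auto. Qed.

Lemma bounded_ext a b : bounded a -> (forall x, a x = b x) -> bounded b.
Proof. intros [M [X H]] E. exists M, X; intros; rewrite <- E; auto. Qed.

Lemma vanishing_zero : vanishing (fun _ => 0).
Proof. intros e He. exists 0%R. intros. rewrite Cmod_0. auto. Qed.

Lemma vanishing_opp a : vanishing a -> vanishing (fun x => - a x).
Proof. intros H e He. destruct (H e He) as [X HX]. exists X. intros x Hx. rewrite Cmod_opp. auto. Qed.

Lemma bounded_of_square g : bounded (fun x => g x * g x) -> bounded g.
Proof.
  intros [M [X H]]. exists (Rabs M + 1)%R, X. intros x Hx. specialize (H x Hx).
  rewrite Cmod_mult in H. pose proof (Cmod_ge_0 (g x)). pose proof (Rle_abs M). nra.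
Qed.

Definition Cdecaying (h : R -> C) : Prop := Csmooth h /\ forall j, vanishing (Dr_n j h).
Definition Cbounded (h : R -> C) : Prop := Csmooth h /\ forall j, bounded (Dr_n j h).

Lemma Cdecaying_upto h : Cdecaying h <-> forall m, upto vanishing m h.
Proof.
  split; [intros [H1 H2] m j _; split; auto|].
  intros H; split; intros m; apply (H m m); lia.
Qed.

Lemma Cbounded_upto h : Cbounded h <-> forall m, upto bounded m h.
Proof.
  split; [intros [H1 H2] m j _; split; auto|].
  intros H; split; intros m; apply (H m m); lia.
Qed.

Lemma Cdecaying_Cbounded h : Cdecaying h -> Cbounded h.
Proof. intros [H1 H2]; split; auto. intros j; apply vanishing_bounded; auto. Qed.

Lemma Cdecaying_mult_l a b : Cbounded a -> Cdecaying b -> Cdecaying (fun x => a x * b x).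
Proof.
  rewrite Cbounded_upto, !Cdecaying_upto. intros Ha Hb m.
  apply (upto_mult bounded vanishing); auto using vanishing_mult_l, vanishing_plus.
Qed.

Lemma Cdecaying_mult_r a b : Cdecaying a -> Cbounded b -> Cdecaying (fun x => a x * b x).
Proof.
  intros Ha Hb. replace (fun x => a x * b x) with (fun x => b x * a x).
  - apply Cdecaying_mult_l; auto.
  - apply functional_extensionality; intros; ring.
Qed.

Lemma Cbounded_mult a b : Cbounded a -> Cbounded b -> Cbounded (fun x => a x * b x).
Proof.
  rewrite !Cbounded_upto. intros Ha Hb m.
  apply (upto_mult bounded bounded); auto using bounded_mult, bounded_plus.
Qed.

Lemma Cdecaying_plus a b : Cdecaying a -> Cdecaying b -> Cdecaying (fun x => a x + b x).
Proof.
  intros [Sa Ga] [Sb Gb]. split; [apply Csmooth_plus; auto|].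
  intros j. rewrite Dr_n_plus by auto. apply vanishing_plus; auto.
Qed.

Lemma Cbounded_plus a b : Cbounded a -> Cbounded b -> Cbounded (fun x => a x + b x).
Proof.
  intros [Sa Ga] [Sb Gb]. split; [apply Csmooth_plus; auto|].
  intros j. rewrite Dr_n_plus by auto. apply bounded_plus; auto.
Qed.

Lemma Cbounded_const c : Cbounded (fun _ => c).
Proof. split; [apply Csmooth_const|]. intros j. rewrite Dr_n_const. apply bounded_const. Qed.

Lemma Cdecaying_zero : Cdecaying (fun _ => 0).
Proof. split; [apply Csmooth_const|]. intros j. rewrite Dr_n_const. destruct j; apply vanishing_zero. Qed.

Lemma Cdecaying_scal c b : Cdecaying b -> Cdecaying (fun x => c * b x).
Proof. intros; apply Cdecaying_mult_l; auto; apply Cbounded_const. Qed.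

Lemma Cbounded_scal c b : Cbounded b -> Cbounded (fun x => c * b x).
Proof. intros; apply Cbounded_mult; auto; apply Cbounded_const. Qed.

Lemma Cdecaying_opp a : Cdecaying a -> Cdecaying (fun x => - a x).
Proof.
  intros H. replace (fun x => - a x) with (fun x => (-1) * a x).
  - apply Cdecaying_scal; auto.
  - apply functional_extensionality; intros; ring.
Qed.

Lemma Cdecaying_minus a b : Cdecaying a -> Cdecaying b -> Cdecaying (fun x => a x - b x).
Proof. intros; apply Cdecaying_plus; auto; apply Cdecaying_opp; auto. Qed.

Lemma Cdecaying_Dr a : Cdecaying a -> Cdecaying (Dr a).
Proof. intros [HS G]; split; [apply Csmooth_Dr; auto|]. intros j. exact (G (S j)). Qed.

Lemma Cdecaying_of_is_Cderive a d : is_Cderive a d -> Cdecaying d -> vanishing a -> Cdecaying a.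
Proof.
  intros H1 [HS G] T. split; [eapply Csmooth_of_is_Cderive; eauto|].
  intros [|j]; simpl; auto. rewrite (is_Cderive_Dr_fun _ _ H1). apply G.
Qed.

Lemma Cdecaying_ext a b : Cdecaying a -> (forall x, a x = b x) -> Cdecaying b.
Proof. intros H E. replace b with a; auto. apply functional_extensionality; auto. Qed.

Lemma Cdecaying_vanishing a : Cdecaying a -> vanishing a.
Proof. intros [_ G]; exact (G 0%nat). Qed.

Lemma Cbounded_bounded a : Cbounded a -> bounded a.
Proof. intros [_ G]; exact (G 0%nat). Qed.

(** * Integrals from -oo *)

Lemma Cmod_lt_of_components (c : C) e :
  (Rabs (fst c) < e / 2)%R -> (Rabs (snd c) < e / 2)%R -> (Cmod c < e)%R.
Proof.
  intros H1 H2. eapply Rle_lt_trans; [apply Cmod_2Rmax|].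
  assert (Hs : (sqrt 2 < 2)%R).
  { rewrite <- (sqrt_square 2) at 2 by lra. apply sqrt_lt_1_alt; lra. }
  pose proof (sqrt_pos 2). pose proof (Rabs_pos (fst c)).
  apply Rle_lt_trans with (sqrt 2 * (e / 2))%R; [|nra].
  apply Rmult_le_compat_l; auto. apply Rmax_lub; lra.
Qed.

Lemma components_lt_of_Cmod (c : C) e :
  (Cmod c < e)%R -> (Rabs (fst c) < e)%R /\ (Rabs (snd c) < e)%R.
Proof.
  intros H. pose proof (Rmax_Cmod c).
  pose proof (Rmax_l (Rabs (fst c)) (Rabs (snd c))).
  pose proof (Rmax_r (Rabs (fst c)) (Rabs (snd c))). split; lra.
Qed.

Definition pinv1 (h : R -> C) (x : R) : C :=
  @RInt_gen C_R_CompleteNormedModule h (Rbar_locally m_infty) (at_point x).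

Definition pinv1_conv (h : R -> C) : Prop :=
  forall x, @ex_RInt_gen C_R_NormedModule h (Rbar_locally m_infty) (at_point x).

Lemma ex_Cderive_continuous h : ex_Cderive h ->
  forall x, continuous (fun y => fst (h y)) x /\ continuous (fun y => snd (h y)) x.
Proof.
  intros H x; destruct (H x).
  split; apply (ex_derive_continuous (K := R_AbsRing) (V := R_NormedModule)); auto.
Qed.

Lemma is_RInt_Cderive (h H : R -> C) a b : is_Cderive H h -> ex_Cderive h ->
  @is_RInt C_R_NormedModule h a b (H b - H a).
Proof.
  intros HD Hc.
  replace (H b - H a) with ((fst (H b) - fst (H a))%R, (snd (H b) - snd (H a))%R)
    by (destruct (H b), (H a); unfold Cminus, Cplus, Copp; simpl; f_equal; ring).
  apply (is_RInt_fct_extend_pair (U := R_NormedModule) (V := R_NormedModule)).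
  - apply (is_RInt_derive (V := R_CompleteNormedModule) (fun y => fst (H y)) (fun y => fst (h y)));
      intros; [apply HD | apply ex_Cderive_continuous; auto].
  - apply (is_RInt_derive (V := R_CompleteNormedModule) (fun y => snd (H y)) (fun y => snd (h y)));
      intros; [apply HD | apply ex_Cderive_continuous; auto].
Qed.

Lemma ex_RInt_Cderive (h : R -> C) a b : ex_Cderive h -> @ex_RInt C_R_NormedModule h a b.
Proof.
  intros Hc. apply (ex_RInt_fct_extend_pair (U := R_NormedModule) (V := R_NormedModule));
    apply (ex_RInt_continuous (V := R_CompleteNormedModule)); intros; apply ex_Cderive_continuous; auto.
Qed.

Lemma RInt_fst (h : R -> C) a b : ex_Cderive h ->
  fst (@RInt C_R_CompleteNormedModule h a b) = RInt (fun z => fst (h z)) a b.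
Proof.
  intros Hc. symmetry. apply is_RInt_unique.
  apply (is_RInt_fct_extend_fst (U := R_NormedModule) (V := R_NormedModule)).
  apply (RInt_correct (V := C_R_CompleteNormedModule)). apply ex_RInt_Cderive; auto.
Qed.

Lemma RInt_snd (h : R -> C) a b : ex_Cderive h ->
  snd (@RInt C_R_CompleteNormedModule h a b) = RInt (fun z => snd (h z)) a b.
Proof.
  intros Hc. symmetry. apply is_RInt_unique.
  apply (is_RInt_fct_extend_snd (U := R_NormedModule) (V := R_NormedModule)).
  apply (RInt_correct (V := C_R_CompleteNormedModule)). apply ex_RInt_Cderive; auto.
Qed.

Lemma pinv1_primitive (h H : R -> C) : is_Cderive H h -> ex_Cderive h -> vanishing H ->
  forall x, pinv1 h x = H x.
Proof.
  intros HD Hc HT x. unfold pinv1.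
  refine (is_RInt_gen_unique (V := C_R_CompleteNormedModule)
            (Fa := Rbar_locally m_infty) (Fb := at_point x) h (H x) _).
  intros P [eps HP]. simpl.
  destruct (HT eps (cond_pos eps)) as [X HX].
  apply (Filter_prod _ _ _ (fun a => (a < X)%R) (fun b => b = x)); [exists X; auto|reflexivity|].
  intros a b Ha Hb. simpl. subst b. exists (H x - H a). split; [apply is_RInt_Cderive; auto|].
  apply HP. destruct (components_lt_of_Cmod _ _ (HX a Ha)) as [E1 E2].
  split; simpl; unfold ball; simpl; unfold AbsRing_ball, abs, minus, plus, opp; simpl.
  - replace (fst (H x) + - fst (H a) + - fst (H x))%R with (- fst (H a))%R by ring.
    rewrite Rabs_Ropp; auto.
  - replace (snd (H x) + - snd (H a) + - snd (H x))%R with (- snd (H a))%R by ring.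
    rewrite Rabs_Ropp; auto.
Qed.

Lemma pinv1_Chasles h : ex_Cderive h -> pinv1_conv h -> forall x y,
  pinv1 h y = pinv1 h x + @RInt C_R_CompleteNormedModule h x y.
Proof.
  intros Hc Hx x y. unfold pinv1.
  rewrite <- (RInt_gen_at_point (V := C_R_CompleteNormedModule) h x y) by (apply ex_RInt_Cderive; auto).
  symmetry. apply (RInt_gen_Chasles (V := C_R_CompleteNormedModule)
                     (Fa := Rbar_locally m_infty) (Fc := at_point y) h x); [apply Hx|].
  apply (ex_RInt_gen_at_point (V := C_R_CompleteNormedModule)). apply ex_RInt_Cderive; auto.
Qed.

Lemma is_Cderive_pinv1 h : ex_Cderive h -> pinv1_conv h -> is_Cderive (pinv1 h) h.
Proof.
  intros Hc Hx x.
  assert (Hcont := ex_Cderive_continuous h Hc).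
  split.
  - apply (is_derive_ext (fun y => fst (pinv1 h x) + RInt (fun z => fst (h z)) x y)%R).
    { intros y. rewrite (pinv1_Chasles h Hc Hx x y), <- RInt_fst by auto. reflexivity. }
    replace (fst (h x)) with (0 + fst (h x))%R by ring.
    apply @is_derive_plus; [apply (is_derive_const (K := R_AbsRing) (V := R_NormedModule))|].
    apply (is_derive_RInt (V := R_NormedModule) (fun z => fst (h z)) (RInt (fun z => fst (h z)) x) x x);
      [|apply Hcont].
    apply filter_forall. intros b. apply (RInt_correct (V := R_CompleteNormedModule)).
    apply (ex_RInt_continuous (V := R_CompleteNormedModule)). intros; apply Hcont.
  - apply (is_derive_ext (fun y => snd (pinv1 h x) + RInt (fun z => snd (h z)) x y)%R).
    { intros y. rewrite (pinv1_Chasles h Hc Hx x y), <- RInt_snd by auto. reflexivity. }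
    replace (snd (h x)) with (0 + snd (h x))%R by ring.
    apply @is_derive_plus; [apply (is_derive_const (K := R_AbsRing) (V := R_NormedModule))|].
    apply (is_derive_RInt (V := R_NormedModule) (fun z => snd (h z)) (RInt (fun z => snd (h z)) x) x x);
      [|apply Hcont].
    apply filter_forall. intros b. apply (RInt_correct (V := R_CompleteNormedModule)).
    apply (ex_RInt_continuous (V := R_CompleteNormedModule)). intros; apply Hcont.
Qed.

Lemma vanishing_pinv1 h : ex_Cderive h -> pinv1_conv h -> vanishing (pinv1 h).
Proof.
  intros Hc Hx eps Heps.
  pose proof (RInt_gen_correct (V := C_R_CompleteNormedModule) (Fa := Rbar_locally m_infty)
                (Fb := at_point 0%R) h (Hx 0%R)) as HI.
  change (is_RInt_gen (V := C_R_NormedModule) h (Rbar_locally m_infty) (at_point 0%R)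
            (pinv1 h 0%R)) in HI.
  assert (He : (0 < eps / 2)%R) by lra.
  destruct (HI (ball (pinv1 h 0%R) (mkposreal _ He))) as [Q Rr [M HM] HR HQR];
    [exists (mkposreal _ He); auto|].
  exists M. intros a Ha.
  destruct (HQR a 0%R (HM a Ha) HR) as [y [Hy [B1 B2]]]. simpl in Hy.
  assert (EP : pinv1 h a = pinv1 h 0%R - y).
  { rewrite (pinv1_Chasles h Hc Hx a 0%R).
    rewrite (is_RInt_unique (V := C_R_CompleteNormedModule) h a 0%R y Hy). ring. }
  rewrite EP. simpl in B1, B2.
  unfold ball in B1, B2; simpl in B1, B2; unfold AbsRing_ball, abs, minus, plus, opp in B1, B2; simpl in B1, B2.
  apply Cmod_lt_of_components.
  - replace (fst (pinv1 h 0%R - y)) with (- (fst y + - fst (pinv1 h 0%R)))%R by (simpl; ring).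
    rewrite Rabs_Ropp; auto.
  - replace (snd (pinv1 h 0%R - y)) with (- (snd y + - snd (pinv1 h 0%R)))%R by (simpl; ring).
    rewrite Rabs_Ropp; auto.
Qed.

Lemma primitive_pinv1_shift H h : is_Cderive H h -> ex_Cderive h -> pinv1_conv h ->
  forall a, H a = H 0%R - pinv1 h 0%R + pinv1 h a.
Proof.
  intros HD Hc Hx a. rewrite (pinv1_Chasles h Hc Hx a 0%R).
  rewrite (is_RInt_unique (V := C_R_CompleteNormedModule) h a 0%R (H 0%R - H a))
    by (apply is_RInt_Cderive; auto).
  ring.
Qed.

Lemma bounded_of_pinv1_conv H h : is_Cderive H h -> ex_Cderive h -> pinv1_conv h -> bounded H.
Proof.
  intros HD Hc Hx.
  eapply bounded_ext; [apply bounded_plus; [apply bounded_const|]|].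
  - apply vanishing_bounded, vanishing_pinv1; [exact Hc|exact Hx].
  - intros x; symmetry; apply (primitive_pinv1_shift H h); auto.
Qed.

Lemma vanishing_of_pinv1_conv H h : is_Cderive H h -> ex_Cderive h -> pinv1_conv h ->
  vanishing (fun a => H a - (H 0%R - pinv1 h 0%R)).
Proof.
  intros HD Hc Hx. eapply vanishing_ext; [apply vanishing_pinv1; [exact Hc|exact Hx]|].
  intros a. rewrite (primitive_pinv1_shift H h HD Hc Hx a). ring.
Qed.

Lemma riccati_bootstrap P (HP : forall p q, P p -> P q -> P (fun x => p x + q x))
  (HM : forall p q, P p -> P q -> P (fun x => p x * q x))
  (HC : forall c, P (fun _ => c)) (g U : R -> C) (c : C) :
  is_Cderive g (fun x => c - U x - g x * g x) -> (forall m, upto P m U) -> P g ->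
  forall m, upto P m g.
Proof.
  intros HD HU Pg.
  assert (Hopp : forall m a, upto P m a -> upto P m (fun x => - a x)).
  { intros m a Ha. replace (fun x => - a x) with (fun x => (-1) * a x).
    - apply (upto_mult P P P HM HP); auto. apply upto_const; auto.
    - apply functional_extensionality; intros; ring. }
  induction m.
  - intros j Hj. assert (j = 0%nat) by lia. subst. split; auto. eapply is_Cderive_ex; eauto.
  - intros [|j] Hj; [split; auto; eapply is_Cderive_ex; eauto|].
    simpl. rewrite (is_Cderive_Dr_fun _ _ HD).
    assert (upto P m (fun x => c - U x - g x * g x)).
    { unfold Cminus. apply (upto_plus P HP); [apply (upto_plus P HP)|].
      - apply upto_const; auto.
      - apply Hopp, HU.
      - apply Hopp, (upto_mult P P P HM HP); auto. }
    apply H; lia.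
Qed.

Lemma linear_bootstrap h a c : is_Cderive h (fun x => a x + c x * h x) ->
  Cdecaying a -> Cbounded c -> vanishing h -> Cdecaying h.
Proof.
  intros HD Ga Bc Th. rewrite Cdecaying_upto in Ga |- *. rewrite Cbounded_upto in Bc.
  induction m.
  - intros j Hj. assert (j = 0%nat) by lia. subst. split; auto. eapply is_Cderive_ex; eauto.
  - intros [|j] Hj; [split; auto; eapply is_Cderive_ex; eauto|].
    simpl. rewrite (is_Cderive_Dr_fun _ _ HD).
    apply (upto_plus vanishing vanishing_plus m); [apply Ga | |lia].
    apply (upto_mult bounded vanishing); auto using vanishing_mult_l, vanishing_plus.
Qed.

Lemma bounded_derive_limit_0 (r dr : R -> R) M X c1 :
  (forall x, is_derive r x (dr x)) -> (forall x, (x < X)%R -> (Rabs (r x) <= M)%R) ->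
  (forall eps, (0 < eps)%R -> exists Y, forall x, (x < Y)%R -> (Rabs (dr x - c1) < eps)%R) ->
  c1 = 0%R.
Proof.
  intros Hd Hb Hl. destruct (Req_dec c1 0) as [|Hne]; auto. exfalso.
  set (d := (Rabs c1 / 2)%R).
  assert (Hdp : (0 < d)%R) by (unfold d; pose proof (Rabs_pos_lt _ Hne); lra).
  destruct (Hl d Hdp) as [Y HY].
  set (x0 := (Rmin X Y - 1)%R).
  assert (Hx0 : (x0 < X)%R /\ (x0 < Y)%R)
    by (unfold x0; pose proof (Rmin_l X Y); pose proof (Rmin_r X Y); lra).
  set (a := (x0 - (2 * Rabs M + 1) / d)%R).
  assert (Ha : (a < x0)%R).
  { unfold a. assert (0 < (2 * Rabs M + 1) / d)%R by (apply Rdiv_lt_0_compat; pose proof (Rabs_pos M); lra).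
    lra. }
  destruct (MVT_abs r dr a x0) as [c [Hc1 Hc2]]; [intros c Hc; apply is_derive_Reals, Hd|].
  rewrite Rmin_left in Hc2 by lra. rewrite Rmax_right in Hc2 by lra.
  assert (Hdc : (d < Rabs (dr c))%R).
  { assert (c < Y)%R by lra. specialize (HY c H). unfold d in *.
    pose proof (Rabs_triang_inv c1 (dr c)). rewrite Rabs_minus_sym in HY. lra. }
  rewrite (Rabs_right (x0 - a)) in Hc1 by lra.
  assert (E : ((x0 - a) * d = 2 * Rabs M + 1)%R) by (unfold a; field; lra).
  assert (H1 : (Rabs (r x0 - r a) > 2 * Rabs M + 1)%R).
  { rewrite Hc1, <- E, Rmult_comm. apply Rmult_lt_compat_l; lra. }
  assert (H2 : (Rabs (r x0) <= M)%R) by (apply Hb; lra).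
  assert (H3 : (Rabs (r a) <= M)%R) by (apply Hb; lra).
  pose proof (Rabs_triang (r x0) (- r a)). rewrite Rabs_Ropp in H. pose proof (Rle_abs M).
  unfold Rminus in H1. lra.
Qed.

Lemma bounded_Cderive_limit_0 g d c : is_Cderive g d -> bounded g ->
  vanishing (fun x => d x - c) -> c = 0.
Proof.
  intros HD [M [X HB]] HT.
  assert (Hre : fst c = 0%R).
  { apply (bounded_derive_limit_0 (fun y => fst (g y)) (fun y => fst (d y)) M X); [apply HD| |].
    - intros x Hx. eapply Rle_trans; [apply re_le_Cmod|]. apply HB; auto.
    - intros eps He. destruct (HT eps He) as [Y HY]. exists Y. intros x Hx.
      eapply Rle_lt_trans; [|apply (HY x Hx)]. exact (re_le_Cmod (d x - c)). }
  assert (Him : snd c = 0%R).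
  { assert (Hsnd : forall z : C, (Rabs (snd z) <= Cmod z)%R)
      by (intros z; eapply Rle_trans; [apply Rmax_r|apply Rmax_Cmod]).
    apply (bounded_derive_limit_0 (fun y => snd (g y)) (fun y => snd (d y)) M X); [apply HD| |].
    - intros x Hx. eapply Rle_trans; [apply Hsnd|]. apply HB; auto.
    - intros eps He. destruct (HT eps He) as [Y HY]. exists Y. intros x Hx.
      eapply Rle_lt_trans; [|apply (HY x Hx)]. exact (Hsnd (d x - c)). }
  destruct c; simpl in *; subst; reflexivity.
Qed.

(** * Finite sums *)

Lemma csum_ext m F G : (forall i, (i < m)%nat -> F i = G i) -> csum m F = csum m G.
Proof. induction m; intros H; simpl; auto. rewrite IHm, H; auto. Qed.

Lemma csum_plus m F G : csum m (fun i => F i + G i) = csum m F + csum m G.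
Proof. induction m; simpl; [ring|]. rewrite IHm. ring. Qed.

Lemma csum_minus m F G : csum m (fun i => F i - G i) = csum m F - csum m G.
Proof. induction m; simpl; [ring|]. rewrite IHm. ring. Qed.

Lemma csum_scal m c F : csum m (fun i => c * F i) = c * csum m F.
Proof. induction m; simpl; [ring|]. rewrite IHm. ring. Qed.

Lemma csum_mulr m c F : csum m (fun i => F i * c) = csum m F * c.
Proof. induction m; simpl; [ring|]. rewrite IHm. ring. Qed.

Lemma csum_eq0 m (F : nat -> C) : (forall i, (i < m)%nat -> F i = 0) -> csum m F = 0.
Proof. induction m; intros H; simpl; auto. rewrite IHm, H; auto. ring. Qed.

Lemma csum_cpow_shift c m (E : nat -> C) :
  csum (S m) (fun i => cpow c (S m - i) * E i) = c * csum (S m) (fun i => cpow c (m - i) * E i).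
Proof.
  rewrite <- csum_scal. apply csum_ext. intros i Hi.
  replace (S m - i)%nat with (S (m - i)) by lia. simpl. ring.
Qed.

Lemma csum_telescope lam (D : nat -> C) m :
  csum (S m) (fun i => cpow lam (m - i) * (lam * D i - D (S i)))
  = cpow lam (S m) * D 0%nat - D (S m).
Proof.
  induction m; [simpl; ring|].
  change (csum (S (S m)) ?F) with (csum (S m) F + F (S m)).
  rewrite (csum_cpow_shift lam m (fun i => lam * D i - D (S i))), IHm, Nat.sub_diag. simpl. ring.
Qed.

Lemma is_Cderive_csum m (T T' : nat -> R -> C) :
  (forall i, (i < m)%nat -> is_Cderive (T i) (T' i)) ->
  is_Cderive (fun x => csum m (fun i => T i x)) (fun x => csum m (fun i => T' i x)).
Proof.
  induction m; intros H; simpl; [apply is_Cderive_const|].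
  apply is_Cderive_plus; [apply IHm; intros; apply H; lia | apply H; lia].
Qed.

(** * The Lenard recursion *)

Definition schrodinger (lam : C) (U F : R -> C) : Prop :=
  forall x, Dr (Dr F) x + (lam + U x) * F x = 0.

Lemma is_Cderive_Dr_schrodinger lam U h : Csmooth h -> schrodinger lam U h ->
  is_Cderive (Dr h) (fun x => - (lam + U x) * h x).
Proof.
  intros S E. eapply is_Cderive_ext; [apply Csmooth_is_Cderive_Dr, Csmooth_Dr, S|].
  intros x. specialize (E x). rewrite <- (Cplus_0_l (- (lam + U x) * h x)), <- E. ring.
Qed.

(* Derivative of L B = -1/4 B'' - U B + 1/2 pinv1 (U' B). *)
Definition lenard (U B : R -> C) : R -> C :=
  fun x => - (1/4) * Dr (Dr (Dr B)) x - U x * Dr B x - (1/2) * (Dr U x * B x).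

Lemma Cdecaying_lenard U B : Cdecaying U -> Cbounded B -> Cdecaying (Dr B) -> Cdecaying (lenard U B).
Proof.
  intros GU BB GB. unfold lenard.
  apply Cdecaying_minus; [apply Cdecaying_minus|].
  - apply Cdecaying_scal, Cdecaying_Dr, Cdecaying_Dr; auto.
  - apply Cdecaying_mult_l; auto. apply Cdecaying_Cbounded; auto.
  - apply Cdecaying_scal, Cdecaying_mult_r; auto. apply Cdecaying_Dr; auto.
Qed.

Definition bseq_props (n : nat) (U : R -> C) (b : nat -> R -> C) : Prop :=
  forall i, (i <= n + 2)%nat ->
    (Cbounded (b i) /\ Cdecaying (Dr (b i)) /\ ((2 <= i)%nat -> Cdecaying (b i))) /\
    ((i <= n + 1)%nat -> is_Cderive (b (S i)) (lenard U (b i))).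

Section Lenard.

Variables (n : nat) (U : R -> C) (b : nat -> R -> C).
Hypothesis GU : Cdecaying U.
Hypothesis Hb0 : b 0%nat = (fun _ => 0).
Hypothesis Hb1 : b 1%nat = (fun _ => 1).
Hypothesis Hbrec : forall k, (S k <= n + 1)%nat ->
  b (S (S k)) = fun x => - (1/4) * Dr (Dr (b (S k))) x - U x * b (S k) x
                         + (1/2) * pinv1 (fun y => Dr U y * b (S k) y) x.
Hypothesis Hbconv : forall k, (k <= n + 1)%nat -> pinv1_conv (fun y => Dr U y * b k y).

Lemma lenard_step i : (i <= n + 1)%nat -> Cbounded (b i) -> Cdecaying (Dr (b i)) ->
  is_Cderive (b (S i)) (lenard U (b i)) /\ ((1 <= i)%nat -> vanishing (b (S i))).
Proof.
  intros Hi BB GB. destruct i as [|k].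
  - rewrite Hb1, Hb0. split; [|intros; lia]. eapply is_Cderive_ext; [apply is_Cderive_const|].
    intros x. unfold lenard. rewrite !Dr_const. ring.
  - assert (HU := Csmooth_is_Cderive_Dr _ (proj1 GU)).
    assert (H1 := Csmooth_is_Cderive_Dr _ (proj1 BB)).
    assert (H2 := Csmooth_is_Cderive_Dr _ (Csmooth_Dr _ (proj1 BB))).
    assert (H3 := Csmooth_is_Cderive_Dr _ (Csmooth_Dr _ (Csmooth_Dr _ (proj1 BB)))).
    assert (Hex : ex_Cderive (fun y => Dr U y * b (S k) y))
      by (apply ex_Cderive_mult; [apply (proj1 GU 1%nat)|apply (proj1 BB 0%nat)]).
    assert (H4 := is_Cderive_pinv1 _ Hex (Hbconv (S k) Hi)).
    rewrite (Hbrec k Hi). split.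
    + eapply is_Cderive_ext; [auto_Cderive|]. intros x; cbv beta. unfold lenard. field.
    + intros _. apply vanishing_plus; [apply vanishing_plus|].
      * apply (vanishing_mult_l (fun _ => - (1/4))); [apply bounded_const|apply (proj2 GB 1%nat)].
      * apply vanishing_opp, vanishing_mult_r;
          [apply Cdecaying_vanishing, GU|apply Cbounded_bounded, BB].
      * apply (vanishing_mult_l (fun _ => 1/2)); [apply bounded_const|].
        apply vanishing_pinv1; auto.
Qed.

Lemma bseq_props_of_recursion : bseq_props n U b.
Proof.
  intros i. induction i as [|i IHi]; intros Hi.
  - assert (B0 : Cbounded (b 0%nat)) by (rewrite Hb0; apply Cbounded_const).
    assert (G0 : Cdecaying (Dr (b 0%nat))) by (rewrite Hb0, Dr_const; apply Cdecaying_zero).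
    split; [split; [auto|split; [auto|intros; lia]]|].
    intros Hi'. apply (lenard_step 0%nat Hi' B0 G0).
  - destruct IHi as [[B1 [G1 _]] _]; [lia|].
    destruct (lenard_step i ltac:(lia) B1 G1) as [HC HT].
    assert (P1 : Cbounded (b (S i)) /\ Cdecaying (Dr (b (S i)))
                 /\ ((2 <= S i)%nat -> Cdecaying (b (S i)))).
    { destruct i as [|k].
      - rewrite Hb1, Dr_const.
        split; [apply Cbounded_const|split; [apply Cdecaying_zero|intros; lia]].
      - assert (Gb : Cdecaying (b (S (S k)))).
        { apply (Cdecaying_of_is_Cderive _ _ HC); [apply Cdecaying_lenard; auto|apply HT; lia]. }
        split; [apply Cdecaying_Cbounded; auto|split; [apply Cdecaying_Dr; auto|auto]]. }
    destruct P1 as [B2 [G2 G2']].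
    split; [auto|]. intros Hi'. apply (lenard_step (S i) Hi' B2 G2).
Qed.

End Lenard.

(** * The Darboux transformation on a time slice *)

Definition logder (F : R -> C) : R -> C := fun x => Dr F x / F x.
Definition ubar1 (U F : R -> C) : R -> C := fun x => U x + 2 * Dr (logder F) x.

(* bdiff U (logder F) b xi i = b_i[ubar1 U F] - b_i[U] (lemma bseq_ubar1). *)
Fixpoint bdiff (U g : R -> C) (b : nat -> R -> C) (xi : C) (i : nat) : R -> C :=
  match i with
  | O => fun _ => 0
  | S k => fun x => xi * bdiff U g b xi k x -
       ((- xi - U x - g x * g x) * b k x + g x * Dr (b k) x - (1/2) * Dr (Dr (b k)) x)
  end.

Lemma bdiff_S U g b xi k : bdiff U g b xi (S k) = fun x => xi * bdiff U g b xi k x -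
  ((- xi - U x - g x * g x) * b k x + g x * Dr (b k) x - (1/2) * Dr (Dr (b k)) x).
Proof. reflexivity. Qed.

Lemma bdiff_csum U g b xi m x : bdiff U g b xi (S m) x =
  - csum (S m) (fun i => cpow xi (m - i) *
      ((- xi - U x - g x * g x) * b i x + g x * Dr (b i) x - (1/2) * Dr (Dr (b i)) x)).
Proof.
  induction m.
  - simpl. ring.
  - rewrite bdiff_S. cbv beta. rewrite IHm.
    change (csum (S (S m)) ?F) with (csum (S m) F + F (S m)).
    rewrite csum_cpow_shift, Nat.sub_diag. simpl cpow. ring.
Qed.

Definition dbar1 (F P : R -> C) : R -> C := fun x => Dr P x - logder F x * P x.

Definition kdv_flux (N : nat) (alpha : C) (B : R -> C) (P : nat -> R -> C) : R -> C :=
  fun x => -2 * B x - 2 * alpha * csum N (fun j => P j x * P j x).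

(* Q^{(n,N)} P at a fixed time, with b the Lenard sequence, a_i = -b_i'/2 and sources Ph. *)
Definition Qslice (n N : nat) (alpha eta : C) (b Ph : nat -> R -> C) (lam : C) (P : R -> C)
  : R -> C :=
  fun x => csum (n + 2) (fun i => (- (1/2) * Dr (b i) x * P x + b i x * Dr P x) * cpow lam (n + 1 - i))
           + eta * P x + alpha * csum N (fun j => Ph j x * pinv1 (fun y => Ph j y * P y) x).

Lemma is_Cderive_kdv_flux N alpha B B' P P' : is_Cderive B B' ->
  (forall j, (j < N)%nat -> is_Cderive (P j) (P' j)) ->
  is_Cderive (kdv_flux N alpha B P)
    (fun x => -2 * B' x - 2 * alpha * csum N (fun j => 2 * (P j x * P' j x))).
Proof.
  intros HB HP. unfold kdv_flux.
  assert (HS : is_Cderive (fun x => csum N (fun j => P j x * P j x))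
                 (fun x => csum N (fun j => 2 * (P j x * P' j x)))).
  { apply (is_Cderive_csum N (fun j x => P j x * P j x)). intros j Hj.
    assert (Hj' := HP j Hj). eapply is_Cderive_ext; [auto_Cderive|]. intros x; cbv beta; ring. }
  eapply is_Cderive_ext; [auto_Cderive|]. intros x; cbv beta; ring.
Qed.

Lemma is_Cderive_Qslice n N alpha eta (U : R -> C) (b Ph : nat -> R -> C) lam P :
  (forall i, (i < n + 2)%nat -> Csmooth (b i)) -> Csmooth P -> schrodinger lam U P ->
  (forall j, (j < N)%nat -> Csmooth (Ph j) /\
     is_Cderive (pinv1 (fun y => Ph j y * P y)) (fun y => Ph j y * P y)) ->
  is_Cderive (Qslice n N alpha eta b Ph lam P) (fun y =>
    csum (n + 2) (fun i => (- (1/2) * Dr (Dr (b i)) y * P y + (1/2) * Dr (b i) y * Dr P y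
                            - (lam + U y) * b i y * P y) * cpow lam (n + 1 - i))
    + eta * Dr P y
    + alpha * csum N (fun j => Dr (Ph j) y * pinv1 (fun z => Ph j z * P z) y + Ph j y * (Ph j y * P y))).
Proof.
  intros Hb SP PS HPh.
  assert (P1 := Csmooth_is_Cderive_Dr _ SP).
  assert (P2 := is_Cderive_Dr_schrodinger _ _ _ SP PS).
  assert (HS1 : is_Cderive
    (fun y => csum (n + 2) (fun i => (- (1/2) * Dr (b i) y * P y + b i y * Dr P y) * cpow lam (n + 1 - i)))
    (fun y => csum (n + 2) (fun i => (- (1/2) * Dr (Dr (b i)) y * P y + (1/2) * Dr (b i) y * Dr P y
                                      - (lam + U y) * b i y * P y) * cpow lam (n + 1 - i)))).
  { apply (is_Cderive_csum (n + 2) (fun i y => (- (1/2) * Dr (b i) y * P y + b i y * Dr P y)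
                                               * cpow lam (n + 1 - i))).
    intros i Hi. assert (B1 := Csmooth_is_Cderive_Dr _ (Hb i Hi)).
    assert (B2 := Csmooth_is_Cderive_Dr _ (Csmooth_Dr _ (Hb i Hi))).
    eapply is_Cderive_ext; [auto_Cderive|]. intros y; cbv beta; field. }
  assert (HS2 : is_Cderive
    (fun y => csum N (fun j => Ph j y * pinv1 (fun z => Ph j z * P z) y))
    (fun y => csum N (fun j => Dr (Ph j) y * pinv1 (fun z => Ph j z * P z) y + Ph j y * (Ph j y * P y)))).
  { apply (is_Cderive_csum N (fun j y => Ph j y * pinv1 (fun z => Ph j z * P z) y)).
    intros j Hj. destruct (HPh j Hj) as [Sj Ij].
    assert (Q1 := Csmooth_is_Cderive_Dr _ Sj). auto_Cderive. }
  unfold Qslice. eapply is_Cderive_ext; [auto_Cderive|]. intros y; cbv beta; ring.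
Qed.

Lemma kdv_algebra (B2 S1 S2 S3 S4 SA SB SE DL Fx F1 gx alpha' eta' : C) :
  Fx <> 0 -> gx = F1 / Fx -> SA * Fx - F1 * SB = Fx * Fx * SE -> DL = - SE ->
  alpha' * S1 + alpha' * S2 - (2 * gx / (Fx * Fx)) * (alpha' * (S3 * Fx - F1 * S4)) = 0 ->
  - (-2 * B2 - 2 * alpha' * S1)
  - 2 * (((SA + eta' * F1 + alpha' * S3) * / Fx + F1 * (- (SB + eta' * Fx + alpha' * S4) / (Fx * Fx))) * gx
         + gx * ((SA + eta' * F1 + alpha' * S3) * / Fx + F1 * (- (SB + eta' * Fx + alpha' * S4) / (Fx * Fx))))
  = -2 * (B2 + (-2 * B2 - 2 * gx * DL)) - 2 * alpha' * S2.
Proof.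
  intros HF Hg K1 KD KS.
  replace SA with ((SA * Fx - F1 * SB + F1 * SB) / Fx) by (field; auto). rewrite K1.
  apply Ceq_minus. rewrite <- (Cmult_0_r 2), <- KS. subst DL gx. field. auto.
Qed.

Lemma lax_t_algebra (SAp SBp SAb S3p S4p S5 SA SB S3 S4 SE DL Px P1 psb gx Fx F1 eta' alpha' : C) :
  Fx <> 0 -> gx = F1 / Fx -> psb = P1 - gx * Px ->
  SAp - gx * SBp - SAb = - DL * Px -> SA * Fx - F1 * SB = Fx * Fx * SE -> DL = - SE ->
  S3p - gx * S4p - (Px / (Fx * Fx)) * (S3 * Fx - F1 * S4) - S5 = 0 ->
  (SAp + eta' * P1 + alpha' * S3p)
  - (((SA + eta' * F1 + alpha' * S3) * / Fx + F1 * (- (SB + eta' * Fx + alpha' * S4) / (Fx * Fx))) * Px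
     + gx * (SBp + eta' * Px + alpha' * S4p))
  = SAb + eta' * psb + alpha' * S5.
Proof.
  intros HF Hg Hp T1 T2 KD T3. apply Ceq_minus.
  replace SA with ((SA * Fx - F1 * SB + F1 * SB) / Fx) by (field; auto). rewrite T2.
  transitivity ((SAp - gx * SBp - SAb + DL * Px)
                + alpha' * (S3p - gx * S4p - (Px / (Fx * Fx)) * (S3 * Fx - F1 * S4) - S5)).
  - subst DL psb gx. field. auto.
  - rewrite T1, T3. ring.
Qed.

Section Darboux.

Variables (U F : R -> C) (xi : C).
Hypothesis GU : Cdecaying U.
Hypothesis GF : Cdecaying F.
Hypothesis Fnz : forall x, F x <> 0.
Hypothesis FS : schrodinger xi U F.
Hypothesis Hubar_conv : pinv1_conv (Dr (ubar1 U F)).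

Lemma riccati_logder : is_Cderive (logder F) (fun x => - xi - U x - logder F x * logder F x).
Proof.
  assert (H1 := Csmooth_is_Cderive_Dr _ (Csmooth_Dr _ (proj1 GF))).
  assert (H2 : is_Cderive (fun x => / F x) (fun x => - Dr F x / (F x * F x)))
    by (apply is_Cderive_inv; auto; apply Csmooth_is_Cderive_Dr, GF).
  unfold logder, Cdiv. eapply is_Cderive_ext; [apply is_Cderive_mult; eauto|].
  intros x; cbv beta. specialize (FS x). specialize (Fnz x).
  replace (Dr (Dr F) x) with (- (xi + U x) * F x)
    by (rewrite <- (Cplus_0_l (- (xi + U x) * F x)), <- FS; ring).
  field; auto.
Qed.

Lemma ubar1_riccati x : ubar1 U F x = - U x - 2 * xi - 2 * (logder F x * logder F x).
Proof. unfold ubar1. rewrite (is_Cderive_Dr _ _ riccati_logder). ring. Qed.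

Lemma is_Cderive_ubar1 :
  is_Cderive (ubar1 U F) (fun x => - Dr U x - 4 * logder F x * (- xi - U x - logder F x * logder F x)).
Proof.
  assert (Hg := riccati_logder). assert (HU := Csmooth_is_Cderive_Dr _ (proj1 GU)).
  eapply is_Cderive_ext_l; [|intros x; symmetry; apply ubar1_riccati].
  eapply is_Cderive_ext; [auto_Cderive|]. intros x; cbv beta. ring.
Qed.

Lemma Csmooth_logder : Csmooth (logder F).
Proof.
  apply Csmooth_upto. intros m.
  refine (riccati_bootstrap (fun _ => True) _ _ _ (logder F) U (- xi) _ _ _ m); auto.
  - exact riccati_logder.
  - apply Csmooth_upto, GU.
Qed.

Lemma Csmooth_ubar1 : Csmooth (ubar1 U F).
Proof.
  replace (ubar1 U F) with (fun x => - U x - 2 * xi - 2 * (logder F x * logder F x))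
    by (apply functional_extensionality; intros; symmetry; apply ubar1_riccati).
  apply Csmooth_minus; [apply Csmooth_minus|].
  - apply Csmooth_opp, GU.
  - apply Csmooth_const.
  - apply Csmooth_scal, Csmooth_mult; apply Csmooth_logder.
Qed.

(* Convergence of pinv1 (ubar1') makes ubar1 converge at -oo; then logder F is bounded and,
   since logder F' = (ubar1 + U)/2 tends to the limit of ubar1 / 2, that limit is 0. *)
Lemma vanishing_ubar1_bounded_logder : vanishing (ubar1 U F) /\ bounded (logder F).
Proof.
  assert (Su := Csmooth_ubar1).
  assert (HD := Csmooth_is_Cderive_Dr _ Su).
  assert (Hex := Su 1%nat).
  assert (Bg : bounded (logder F)).
  { apply bounded_of_square. eapply bounded_ext.
    - apply (bounded_mult (fun _ => - / 2)); [apply bounded_const|].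
      apply bounded_plus; [apply bounded_plus|].
      + apply (bounded_of_pinv1_conv _ _ HD Hex Hubar_conv).
      + apply Cbounded_bounded, Cdecaying_Cbounded, GU.
      + apply (bounded_const (2 * xi)).
    - intros x; cbv beta. rewrite ubar1_riccati. field. }
  set (L := ubar1 U F 0%R - pinv1 (Dr (ubar1 U F)) 0%R).
  assert (T1 : vanishing (fun a => ubar1 U F a - L)) by (apply vanishing_of_pinv1_conv; auto).
  assert (HL : L / 2 = 0).
  { apply (bounded_Cderive_limit_0 _ _ _ riccati_logder Bg).
    eapply vanishing_ext.
    - apply (vanishing_mult_l (fun _ => / 2)); [apply bounded_const|].
      apply vanishing_plus; [exact T1|].
      apply (vanishing_mult_l (fun _ => -1)); [apply bounded_const|apply Cdecaying_vanishing, GU].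
    - intros x; cbv beta. rewrite ubar1_riccati. field. }
  assert (L = 0) by (replace L with (2 * (L / 2)) by field; rewrite HL; ring).
  split; auto. eapply vanishing_ext; [exact T1|]. intros x; cbv beta. rewrite H. ring.
Qed.

Lemma Cbounded_logder : Cbounded (logder F).
Proof.
  apply Cbounded_upto. intros m.
  refine (riccati_bootstrap bounded _ _ _ (logder F) U (- xi) _ _ _ m).
  - apply bounded_plus.
  - apply bounded_mult.
  - apply bounded_const.
  - exact riccati_logder.
  - apply Cbounded_upto, Cdecaying_Cbounded, GU.
  - apply vanishing_ubar1_bounded_logder.
Qed.

(* logder F' solves h' = - U' - 2 (logder F) h. *)
Lemma Cdecaying_Dr_logder : Cdecaying (fun x => - xi - U x - logder F x * logder F x).
Proof.
  assert (Hg := riccati_logder). assert (HU := Csmooth_is_Cderive_Dr _ (proj1 GU)).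
  apply linear_bootstrap with (a := fun x => - Dr U x) (c := fun x => -2 * logder F x).
  - eapply is_Cderive_ext; [auto_Cderive|]. intros x; cbv beta. ring.
  - apply Cdecaying_opp, Cdecaying_Dr, GU.
  - apply Cbounded_scal, Cbounded_logder.
  - eapply vanishing_ext.
    + apply (vanishing_mult_l (fun _ => / 2)); [apply bounded_const|].
      apply vanishing_plus; [apply vanishing_ubar1_bounded_logder|].
      apply (vanishing_mult_l (fun _ => -1)); [apply bounded_const|apply Cdecaying_vanishing, GU].
    + intros x; cbv beta. rewrite ubar1_riccati. field.
Qed.

Lemma Cdecaying_ubar1 : Cdecaying (ubar1 U F).
Proof.
  apply (Cdecaying_ext (fun x => U x + 2 * (- xi - U x - logder F x * logder F x))).
  - apply Cdecaying_plus; [exact GU|]. apply Cdecaying_scal, Cdecaying_Dr_logder.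
  - intros x; cbv beta. rewrite ubar1_riccati. ring.
Qed.

Variables (n : nat) (b : nat -> R -> C).
Hypothesis HBF : bseq_props n U b.
Hypothesis Hb0 : b 0%nat = (fun _ => 0).

Lemma bdiff_props i : (i <= n + 2)%nat ->
  Cdecaying (bdiff U (logder F) b xi i) /\
  is_Cderive (bdiff U (logder F) b xi i)
    (fun x => -2 * Dr (b i) x - 2 * logder F x * bdiff U (logder F) b xi i x).
Proof.
  assert (Hg := riccati_logder). assert (Bg := Cbounded_logder).
  assert (HU := Csmooth_is_Cderive_Dr _ (proj1 GU)).
  induction i as [|i IHi]; intros Hi.
  - simpl. split; [apply Cdecaying_zero|].
    eapply is_Cderive_ext; [apply is_Cderive_const|]. intros x. rewrite Hb0, Dr_const. ring.
  - destruct IHi as [GD CDD]; [lia|].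
    destruct (HBF i) as [[BB [GB _]] HC]; [lia|]. specialize (HC ltac:(lia)).
    split.
    + simpl. apply Cdecaying_minus; [apply Cdecaying_scal; auto|].
      apply Cdecaying_minus; [apply Cdecaying_plus|].
      * apply Cdecaying_mult_r; [apply Cdecaying_Dr_logder|auto].
      * apply Cdecaying_mult_l; auto.
      * apply Cdecaying_scal, Cdecaying_Dr; auto.
    + assert (H1 := Csmooth_is_Cderive_Dr _ (proj1 BB)).
      assert (H2 := Csmooth_is_Cderive_Dr _ (Csmooth_Dr _ (proj1 BB))).
      assert (H3 := Csmooth_is_Cderive_Dr _ (Csmooth_Dr _ (Csmooth_Dr _ (proj1 BB)))).
      simpl. eapply is_Cderive_ext; [auto_Cderive|].
      intros x; cbv beta. rewrite (is_Cderive_Dr _ _ HC). unfold lenard. field.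
Qed.

(* L[ubar1] (b_i + d_i) = b_(i+1) + d_(i+1): the nonlocal term has an explicit primitive. *)
Lemma lenard_ubar1 k : (S (S k) <= n + 2)%nat -> forall x,
  - (1/4) * Dr (Dr (fun y => b (S k) y + bdiff U (logder F) b xi (S k) y)) x
  - ubar1 U F x * (b (S k) x + bdiff U (logder F) b xi (S k) x)
  + (1/2) * pinv1 (fun y => Dr (ubar1 U F) y
                           * (b (S k) y + bdiff U (logder F) b xi (S k) y)) x
  = b (S (S k)) x + bdiff U (logder F) b xi (S (S k)) x.
Proof.
  intros Hk.
  assert (Hg := riccati_logder). assert (Bg := Cbounded_logder).
  assert (GUb := Cdecaying_ubar1). assert (HUb := is_Cderive_ubar1).
  assert (HU := Csmooth_is_Cderive_Dr _ (proj1 GU)).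
  destruct (HBF (S k)) as [[BB [GB _]] HCB]; [lia|]. specialize (HCB ltac:(lia)).
  destruct (HBF (S (S k))) as [[_ [_ GB2]] _]; [lia|]. specialize (GB2 ltac:(lia)).
  destruct (bdiff_props (S k)) as [GD HD]; [lia|].
  destruct (bdiff_props (S (S k))) as [GD2 _]; [lia|].
  set (g := logder F) in *. set (Ub := ubar1 U F) in *.
  set (B := b (S k)) in *. set (D := bdiff U g b xi (S k)) in *.
  assert (H1 := Csmooth_is_Cderive_Dr _ (proj1 BB)).
  assert (H2 := Csmooth_is_Cderive_Dr _ (Csmooth_Dr _ (proj1 BB))).
  assert (H3 := Csmooth_is_Cderive_Dr _ (Csmooth_Dr _ (Csmooth_Dr _ (proj1 BB)))).
  assert (E1 : Dr (fun x => B x + D x) = fun x => Dr B x + (-2 * Dr B x - 2 * g x * D x))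
    by (apply is_Cderive_Dr_fun; auto_Cderive).
  assert (E2 : Dr (Dr (fun x => B x + D x)) = fun x => Dr (Dr B) x +
            (-2 * Dr (Dr B) x - 2 * ((- xi - U x - g x * g x) * D x
                                      + g x * (-2 * Dr B x - 2 * g x * D x)))).
  { rewrite E1. apply is_Cderive_Dr_fun. eapply is_Cderive_ext; [auto_Cderive|].
    intros x; cbv beta; ring. }
  set (H := fun x => 2 * (b (S (S k)) x + bdiff U g b xi (S (S k)) x)
                     + (1/2) * Dr (Dr (fun x => B x + D x)) x + 2 * (Ub x * (B x + D x))).
  assert (HH : is_Cderive H (fun y => Dr Ub y * (B y + D y))).
  { unfold H. rewrite E2, bdiff_S. fold D B.
    rewrite (is_Cderive_Dr_fun _ _ HUb). eapply is_Cderive_ext; [auto_Cderive|].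
    intros x. unfold Ub. cbv beta. unfold lenard. rewrite ubar1_riccati. fold g. field. }
  assert (GH : Cdecaying H).
  { unfold H. apply Cdecaying_plus; [apply Cdecaying_plus|].
    - apply Cdecaying_scal, Cdecaying_plus; auto.
    - apply Cdecaying_scal, Cdecaying_Dr. rewrite E1. apply Cdecaying_plus; auto.
      apply Cdecaying_minus; [apply Cdecaying_scal; auto|].
      apply Cdecaying_mult_l; auto. apply Cbounded_scal; auto.
    - apply Cdecaying_scal, Cdecaying_mult_r; auto.
      apply Cbounded_plus; auto. apply Cdecaying_Cbounded; auto. }
  assert (Hex : ex_Cderive (fun y => Dr Ub y * (B y + D y))).
  { apply ex_Cderive_mult; [apply (proj1 GUb 1%nat)|].
    apply ex_Cderive_plus; [apply (proj1 BB 0%nat)|apply (proj1 GD 0%nat)]. }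
  intros x. rewrite (pinv1_primitive _ H HH Hex (Cdecaying_vanishing _ GH)).
  unfold H. rewrite E2. field.
Qed.

Lemma is_Cderive_dbar1 lam P : Csmooth P -> schrodinger lam U P ->
  is_Cderive (dbar1 F P) (fun x => - (lam + U x) * P x
    - ((- xi - U x - logder F x * logder F x) * P x + logder F x * Dr P x)).
Proof.
  intros SP PS. assert (Hg := riccati_logder).
  assert (H1 := Csmooth_is_Cderive_Dr _ SP). assert (H2 := is_Cderive_Dr_schrodinger _ _ _ SP PS).
  unfold dbar1. eapply is_Cderive_ext; [auto_Cderive|]. intros y; cbv beta; ring.
Qed.

Lemma Cdecaying_dbar1 P : Cdecaying P -> Cdecaying (dbar1 F P).
Proof.
  intros GP. unfold dbar1. apply Cdecaying_minus; [apply Cdecaying_Dr; auto|].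
  apply Cdecaying_mult_l; auto. apply Cbounded_logder.
Qed.

Lemma dbar1_schrodinger lam P : Csmooth P -> schrodinger lam U P ->
  schrodinger lam (ubar1 U F) (dbar1 F P).
Proof.
  intros SP PS x.
  assert (Hg := riccati_logder). assert (HU := Csmooth_is_Cderive_Dr _ (proj1 GU)).
  assert (H1 := Csmooth_is_Cderive_Dr _ SP). assert (H2 := is_Cderive_Dr_schrodinger _ _ _ SP PS).
  rewrite (is_Cderive_Dr_fun _ _ (is_Cderive_dbar1 lam P SP PS)).
  set (g := logder F) in *.
  rewrite (is_Cderive_Dr (fun x => - (lam + U x) * P x
                                   - ((- xi - U x - g x * g x) * P x + g x * Dr P x))
             _ ltac:(auto_Cderive)).
  rewrite ubar1_riccati. fold g. unfold dbar1. fold g. ring.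
Qed.

Lemma Csmooth_dbar1 P : Csmooth P -> Csmooth (dbar1 F P).
Proof.
  intros SP. apply Csmooth_minus; [apply Csmooth_Dr; auto|].
  apply Csmooth_mult; [apply Csmooth_logder|auto].
Qed.

Lemma is_Cderive_wronskian lam1 lam2 P1 P2 : Csmooth P1 -> Csmooth P2 ->
  schrodinger lam1 U P1 -> schrodinger lam2 U P2 ->
  is_Cderive (fun y => P1 y * Dr P2 y - Dr P1 y * P2 y) (fun y => (lam1 - lam2) * (P1 y * P2 y)).
Proof.
  intros S1 S2 E1 E2.
  assert (H1 := Csmooth_is_Cderive_Dr _ S1). assert (H2 := is_Cderive_Dr_schrodinger _ _ _ S1 E1).
  assert (H3 := Csmooth_is_Cderive_Dr _ S2). assert (H4 := is_Cderive_Dr_schrodinger _ _ _ S2 E2).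
  eapply is_Cderive_ext; [auto_Cderive|]. intros y; cbv beta; ring.
Qed.

Lemma vanishing_wronskian P1 P2 : Cdecaying P1 -> Cdecaying P2 ->
  vanishing (fun y => P1 y * Dr P2 y - Dr P1 y * P2 y).
Proof.
  intros G1 G2. apply vanishing_plus; [|apply vanishing_opp];
    [apply vanishing_mult_r | apply vanishing_mult_r];
    solve [ apply Cdecaying_vanishing; auto using Cdecaying_Dr
          | apply Cbounded_bounded, Cdecaying_Cbounded; auto using Cdecaying_Dr ].
Qed.

Lemma pinv1_wronskian lam1 lam2 P1 P2 : Cdecaying P1 -> Cdecaying P2 ->
  schrodinger lam1 U P1 -> schrodinger lam2 U P2 -> pinv1_conv (fun y => P1 y * P2 y) ->
  forall y, (lam1 - lam2) * pinv1 (fun y => P1 y * P2 y) y = P1 y * Dr P2 y - Dr P1 y * P2 y.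
Proof.
  intros G1 G2 E1 E2 Hconv y.
  assert (Hex : ex_Cderive (fun y => P1 y * P2 y))
    by (apply ex_Cderive_mult; [apply (proj1 G1 0%nat)|apply (proj1 G2 0%nat)]).
  set (K := fun y => (lam1 - lam2) * pinv1 (fun y => P1 y * P2 y) y
                     - (P1 y * Dr P2 y - Dr P1 y * P2 y)).
  assert (CK : is_Cderive K (fun _ => 0)).
  { assert (HW := is_Cderive_wronskian _ _ _ _ (proj1 G1) (proj1 G2) E1 E2).
    assert (HI := is_Cderive_pinv1 _ Hex Hconv).
    unfold K. eapply is_Cderive_ext.
    - apply is_Cderive_minus; [apply is_Cderive_mult; [apply is_Cderive_const|exact HI]|exact HW].
    - intros x; cbv beta. ring. }
  assert (TK : vanishing K).
  { apply vanishing_plus; [|apply vanishing_opp, vanishing_wronskian; auto].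
    apply vanishing_mult_l; [apply bounded_const|apply vanishing_pinv1; auto]. }
  assert (Hex0 := is_Cderive_ex _ _ (is_Cderive_const 0)).
  pose proof (pinv1_primitive _ K CK Hex0 TK y) as E.
  rewrite (pinv1_primitive _ _ (is_Cderive_const 0) Hex0 vanishing_zero y) in E.
  unfold K in E. rewrite <- (Cplus_0_l (P1 y * Dr P2 y - Dr P1 y * P2 y)), E. ring.
Qed.

Variables (N : nat) (Ph : nat -> R -> C) (lj rr : nat -> C) (alpha eta : C).
Hypothesis HPh : forall j, (j < N)%nat ->
  Cdecaying (Ph j) /\ schrodinger (lj j) U (Ph j) /\ lj j <> xi /\ rr j * rr j = lj j - xi.

Lemma pinv1_source_F j : (j < N)%nat -> forall x,
  pinv1 (fun y => Ph j y * F y) x = (Ph j x * Dr F x - Dr (Ph j) x * F x) / (lj j - xi).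
Proof.
  intros Hj. destruct (HPh j Hj) as [GP [PS [Hne _]]].
  assert (Hne' : lj j - xi <> 0) by (intro E; apply Hne; apply (f_equal (fun z => z + xi)) in E; ring_simplify in E; exact E).
  apply pinv1_primitive.
  - unfold Cdiv. eapply is_Cderive_ext.
    + apply is_Cderive_mult; [apply (is_Cderive_wronskian _ _ _ _ (proj1 GP) (proj1 GF) PS FS)|].
      apply is_Cderive_const.
    + intros x; cbv beta. field. auto.
  - apply ex_Cderive_mult; [apply (proj1 GP 0%nat)|apply (proj1 GF 0%nat)].
  - apply vanishing_mult_r; [apply vanishing_wronskian; auto|apply bounded_const].
Qed.

Lemma is_Cderive_pinv1_source_F j : (j < N)%nat ->
  is_Cderive (pinv1 (fun y => Ph j y * F y)) (fun y => Ph j y * F y).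
Proof.
  intros Hj. destruct (HPh j Hj) as [GP [PS [Hne _]]].
  assert (Hne' : lj j - xi <> 0) by (intro E; apply Hne; apply (f_equal (fun z => z + xi)) in E; ring_simplify in E; exact E).
  eapply is_Cderive_ext_l; [|intros x; symmetry; apply (pinv1_source_F j Hj)].
  unfold Cdiv. eapply is_Cderive_ext.
  - apply is_Cderive_mult; [apply (is_Cderive_wronskian _ _ _ _ (proj1 GP) (proj1 GF) PS FS)|].
    apply is_Cderive_const.
  - intros x; cbv beta. field. auto.
Qed.

Lemma lenard_sums_F x :
  csum (n + 2) (fun i => (- (1/2) * Dr (Dr (b i)) x * F x + (1/2) * Dr (b i) x * Dr F x
                          - (xi + U x) * b i x * F x) * cpow xi (n + 1 - i)) * F x
  - Dr F x * csum (n + 2) (fun i => (- (1/2) * Dr (b i) x * F x + b i x * Dr F x) * cpow xi (n + 1 - i))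
  = F x * F x * csum (n + 2) (fun i => cpow xi (n + 1 - i) *
      ((- xi - U x - logder F x * logder F x) * b i x + logder F x * Dr (b i) x
       - (1/2) * Dr (Dr (b i)) x)).
Proof.
  rewrite <- (csum_mulr (n + 2) (F x)), <- (csum_scal (n + 2) (Dr F x)), <- csum_minus,
    <- (csum_scal (n + 2) (F x * F x)).
  apply csum_ext. intros i Hi. unfold logder. field. apply Fnz.
Qed.

Lemma bdiff_csum_n2 x : bdiff U (logder F) b xi (n + 2) x =
  - csum (n + 2) (fun i => cpow xi (n + 1 - i) *
      ((- xi - U x - logder F x * logder F x) * b i x + logder F x * Dr (b i) x
       - (1/2) * Dr (Dr (b i)) x)).
Proof. replace (n + 2)%nat with (S (n + 1)) by lia. apply bdiff_csum. Qed.

Lemma rr_spec j : (j < N)%nat -> rr j <> 0 /\ lj j = rr j * rr j + xi.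
Proof.
  intros Hj. destruct (HPh j Hj) as [_ [_ [Hne Hrr]]].
  assert (Elj : lj j = rr j * rr j + xi) by (rewrite Hrr; ring).
  split; auto. intro E; apply Hne; rewrite Elj, E; ring.
Qed.

Lemma kdv_sources_identity x :
  alpha * csum N (fun j => 2 * (Ph j x * Dr (Ph j) x))
  + alpha * csum N (fun j => 2 * (/ rr j * dbar1 F (Ph j) x * (/ rr j *
       (- (lj j + U x) * Ph j x - ((- xi - U x - logder F x * logder F x) * Ph j x
                                  + logder F x * Dr (Ph j) x)))))
  - (2 * logder F x / (F x * F x)) * (alpha *
      (csum N (fun j => Dr (Ph j) x * pinv1 (fun z => Ph j z * F z) x + Ph j x * (Ph j x * F x)) * F x
       - Dr F x * csum N (fun j => Ph j x * pinv1 (fun z => Ph j z * F z) x)))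
  = 0.
Proof.
  rewrite <- (csum_mulr N (F x)), <- (csum_scal N (Dr F x)), <- csum_minus, <- !(csum_scal N alpha),
    <- (csum_scal N (2 * logder F x / (F x * F x))), <- csum_plus, <- csum_minus.
  apply csum_eq0. intros j Hj. cbv beta. rewrite (pinv1_source_F j Hj).
  destruct (rr_spec j Hj) as [Hr0 Elj].
  assert (Hq : rr j * rr j + xi - xi <> 0)
    by (replace (rr j * rr j + xi - xi) with (rr j * rr j) by ring; apply Cmult_neq_0; auto).
  rewrite Elj. unfold dbar1, logder. field. repeat split; auto.
Qed.

Lemma Cdecaying_source j : (j < N)%nat -> Cdecaying (Ph j).
Proof. intros Hj. apply (HPh j Hj). Qed.

Lemma is_Cderive_Qslice_F :
  is_Cderive (Qslice n N alpha eta b Ph xi F) (fun y =>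
    csum (n + 2) (fun i => (- (1/2) * Dr (Dr (b i)) y * F y + (1/2) * Dr (b i) y * Dr F y
                            - (xi + U y) * b i y * F y) * cpow xi (n + 1 - i))
    + eta * Dr F y
    + alpha * csum N (fun j => Dr (Ph j) y * pinv1 (fun z => Ph j z * F z) y + Ph j y * (Ph j y * F y))).
Proof.
  apply is_Cderive_Qslice; [| apply GF | apply FS |].
  - intros i Hi. destruct (HBF i ltac:(lia)) as [[Bi _] _]. apply Bi.
  - intros j Hj. split; [apply Cdecaying_source; auto|apply is_Cderive_pinv1_source_F; auto].
Qed.

(* ubar1_t = - u_t - 4 g g_t with g_t = (Q f1)_x / f1 - f1_x (Q f1) / f1^2 *)
Lemma ubar1_evolution x :
  let QF := Qslice n N alpha eta b Ph xi F in
  let gt := Dr QF x * / F x + Dr F x * (- QF x / (F x * F x)) in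
  - Dr (kdv_flux N alpha (b (n + 2)%nat) Ph) x - 2 * (gt * logder F x + logder F x * gt)
  = Dr (kdv_flux N alpha (fun y => b (n + 2)%nat y + bdiff U (logder F) b xi (n + 2) y)
                 (fun j y => / rr j * dbar1 F (Ph j) y)) x.
Proof.
  cbv zeta.
  destruct (HBF (n + 2)%nat) as [[Bn _] _]; [lia|].
  destruct (bdiff_props (n + 2)%nat) as [_ Dn]; [lia|].
  assert (Bn' := Csmooth_is_Cderive_Dr _ (proj1 Bn)).
  assert (CL := is_Cderive_kdv_flux N alpha _ _ Ph (fun j => Dr (Ph j)) Bn'
                  (fun j Hj => Csmooth_is_Cderive_Dr _ (proj1 (Cdecaying_source j Hj)))).
  assert (HPb : forall j, (j < N)%nat -> is_Cderive (fun y => / rr j * dbar1 F (Ph j) y)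
      (fun y => / rr j * (- (lj j + U y) * Ph j y
                          - ((- xi - U y - logder F y * logder F y) * Ph j y + logder F y * Dr (Ph j) y)))).
  { intros j Hj. destruct (HPh j Hj) as [GP [PS _]].
    eapply is_Cderive_ext.
    - apply is_Cderive_mult; [apply is_Cderive_const|apply (is_Cderive_dbar1 _ _ (proj1 GP) PS)].
    - intros y; cbv beta; ring. }
  assert (CR := is_Cderive_kdv_flux N alpha _ _ _ _ (is_Cderive_plus _ _ _ _ Bn' Dn) HPb).
  rewrite (is_Cderive_Dr _ _ is_Cderive_Qslice_F x), (is_Cderive_Dr _ _ CL x),
    (is_Cderive_Dr _ _ CR x).
  unfold Qslice.
  eapply kdv_algebra; [apply Fnz | reflexivity | apply lenard_sums_F | apply bdiff_csum_n2 |].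
  cbv beta. apply kdv_sources_identity.
Qed.

Section Eigenfunction.

Variables (lam : C) (Ps : R -> C).
Hypothesis GPs : Cdecaying Ps.
Hypothesis PsS : schrodinger lam U Ps.
Hypothesis HcPs : forall j, (j < N)%nat -> pinv1_conv (fun y => Ph j y * Ps y).

Lemma pinv1_dbar1_source j : (j < N)%nat -> forall x,
  pinv1 (fun y => / rr j * dbar1 F (Ph j) y * dbar1 F Ps y) x
  = / rr j * (Ph j x * dbar1 F Ps x + (lam - xi) * pinv1 (fun y => Ph j y * Ps y) x).
Proof.
  intros Hj. destruct (HPh j Hj) as [GP [PS _]]. destruct (rr_spec j Hj) as [Hr0 _].
  assert (Hex : ex_Cderive (fun y => Ph j y * Ps y))
    by (apply ex_Cderive_mult; [apply (proj1 GP 0%nat)|apply (proj1 GPs 0%nat)]).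
  assert (CP := is_Cderive_pinv1 _ Hex (HcPs j Hj)).
  assert (P1 := Csmooth_is_Cderive_Dr _ (proj1 GP)).
  assert (P2 := is_Cderive_Dr_schrodinger _ _ _ (proj1 GP) PS).
  assert (D1 := is_Cderive_dbar1 _ _ (proj1 GPs) PsS).
  assert (G1 := Cdecaying_dbar1 _ GPs). assert (G2 := Cdecaying_dbar1 _ GP).
  apply pinv1_primitive.
  - eapply is_Cderive_ext; [auto_Cderive|]. intros y; cbv beta. unfold dbar1. field. auto.
  - apply ex_Cderive_mult; [apply ex_Cderive_mult|].
    + apply (is_Cderive_ex _ _ (is_Cderive_const _)).
    + apply (proj1 G2 0%nat).
    + apply (proj1 G1 0%nat).
  - apply vanishing_mult_l; [apply bounded_const|]. apply vanishing_plus.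
    + apply vanishing_mult_r; [apply Cdecaying_vanishing; auto|].
      apply Cbounded_bounded, Cdecaying_Cbounded; auto.
    + apply vanishing_mult_l; [apply bounded_const|apply vanishing_pinv1; auto].
Qed.

Lemma dbar_sums_identity x :
  csum (n + 2) (fun i => (- (1/2) * Dr (Dr (b i)) x * Ps x + (1/2) * Dr (b i) x * Dr Ps x
                          - (lam + U x) * b i x * Ps x) * cpow lam (n + 1 - i))
  - logder F x * csum (n + 2) (fun i => (- (1/2) * Dr (b i) x * Ps x + b i x * Dr Ps x)
                                         * cpow lam (n + 1 - i))
  - csum (n + 2) (fun i =>
      (- (1/2) * (Dr (b i) x + (-2 * Dr (b i) x - 2 * logder F x * bdiff U (logder F) b xi i x))
         * dbar1 F Ps x
       + (b i x + bdiff U (logder F) b xi i x)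
         * (- (lam + U x) * Ps x - ((- xi - U x - logder F x * logder F x) * Ps x
                                    + logder F x * Dr Ps x))) * cpow lam (n + 1 - i))
  = - bdiff U (logder F) b xi (n + 2) x * Ps x.
Proof.
  rewrite <- (csum_scal (n + 2) (logder F x)), <- !csum_minus.
  transitivity (csum (n + 2) (fun i => cpow lam (n + 1 - i)
     * (lam * bdiff U (logder F) b xi i x - bdiff U (logder F) b xi (S i) x)) * Ps x).
  - rewrite <- csum_mulr. apply csum_ext. intros i Hi. rewrite bdiff_S. unfold dbar1. field.
  - replace (n + 2)%nat with (S (n + 1)) by lia. rewrite csum_telescope. simpl bdiff. ring.
Qed.

Lemma dbar_sources_identity x :
  csum N (fun j => Dr (Ph j) x * pinv1 (fun z => Ph j z * Ps z) x + Ph j x * (Ph j x * Ps x))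
  - logder F x * csum N (fun j => Ph j x * pinv1 (fun z => Ph j z * Ps z) x)
  - (Ps x / (F x * F x)) *
      (csum N (fun j => Dr (Ph j) x * pinv1 (fun z => Ph j z * F z) x + Ph j x * (Ph j x * F x)) * F x
       - Dr F x * csum N (fun j => Ph j x * pinv1 (fun z => Ph j z * F z) x))
  - csum N (fun j => / rr j * dbar1 F (Ph j) x *
      (/ rr j * (Ph j x * dbar1 F Ps x + (lam - xi) * pinv1 (fun y => Ph j y * Ps y) x)))
  = 0.
Proof.
  rewrite <- (csum_mulr N (F x)), <- (csum_scal N (Dr F x)), <- csum_minus,
    <- (csum_scal N (Ps x / (F x * F x))), <- (csum_scal N (logder F x)), <- !csum_minus.
  apply csum_eq0. intros j Hj. cbv beta. rewrite (pinv1_source_F j Hj).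
  destruct (HPh j Hj) as [GP [PS _]]. destruct (rr_spec j Hj) as [Hr0 Elj].
  assert (WR := pinv1_wronskian _ _ _ _ GP GPs PS PsS (HcPs j Hj) x).
  assert (Hq : rr j * rr j + xi - xi <> 0)
    by (replace (rr j * rr j + xi - xi) with (rr j * rr j) by ring; apply Cmult_neq_0; auto).
  transitivity ((Dr (Ph j) x - logder F x * Ph j x) / (rr j * rr j) *
     ((lj j - lam) * pinv1 (fun y => Ph j y * Ps y) x - (Ph j x * Dr Ps x - Dr (Ph j) x * Ps x))).
  - unfold dbar1, logder. rewrite Elj. field. repeat split; auto.
  - rewrite WR. ring.
Qed.

Lemma dbar1_evolution x :
  let QF := Qslice n N alpha eta b Ph xi F in
  let QP := Qslice n N alpha eta b Ph lam Ps in
  Dr QP x - ((Dr QF x * / F x + Dr F x * (- QF x / (F x * F x))) * Ps x + logder F x * QP x)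
  = Qslice n N alpha eta (fun i y => b i y + bdiff U (logder F) b xi i y)
      (fun j y => / rr j * dbar1 F (Ph j) y) lam (dbar1 F Ps) x.
Proof.
  cbv zeta.
  assert (DQP : is_Cderive (Qslice n N alpha eta b Ph lam Ps) (fun y =>
    csum (n + 2) (fun i => (- (1/2) * Dr (Dr (b i)) y * Ps y + (1/2) * Dr (b i) y * Dr Ps y
                            - (lam + U y) * b i y * Ps y) * cpow lam (n + 1 - i))
    + eta * Dr Ps y
    + alpha * csum N (fun j => Dr (Ph j) y * pinv1 (fun z => Ph j z * Ps z) y + Ph j y * (Ph j y * Ps y)))).
  { apply is_Cderive_Qslice; [| apply GPs | apply PsS |].
    - intros i Hi. destruct (HBF i ltac:(lia)) as [[Bi _] _]. apply Bi.
    - intros j Hj. destruct (HPh j Hj) as [GP _]. split; [apply GP|].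
      apply is_Cderive_pinv1; [|apply HcPs; auto].
      apply ex_Cderive_mult; [apply (proj1 GP 0%nat)|apply (proj1 GPs 0%nat)]. }
  rewrite (is_Cderive_Dr _ _ DQP x), (is_Cderive_Dr _ _ is_Cderive_Qslice_F x).
  unfold Qslice. cbv beta.
  rewrite (csum_ext N (fun j => / rr j * dbar1 F (Ph j) x
                             * pinv1 (fun y => / rr j * dbar1 F (Ph j) y * dbar1 F Ps y) x)
                     (fun j => / rr j * dbar1 F (Ph j) x *
      (/ rr j * (Ph j x * dbar1 F Ps x + (lam - xi) * pinv1 (fun y => Ph j y * Ps y) x))))
    by (intros j Hj; rewrite pinv1_dbar1_source; auto).
  rewrite (csum_ext (n + 2) (fun i =>
      (- (1/2) * Dr (fun y => b i y + bdiff U (logder F) b xi i y) x * dbar1 F Ps x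
       + (b i x + bdiff U (logder F) b xi i x) * Dr (dbar1 F Ps) x) * cpow lam (n + 1 - i))
    (fun i =>
      (- (1/2) * (Dr (b i) x + (-2 * Dr (b i) x - 2 * logder F x * bdiff U (logder F) b xi i x))
         * dbar1 F Ps x
       + (b i x + bdiff U (logder F) b xi i x)
         * (- (lam + U x) * Ps x - ((- xi - U x - logder F x * logder F x) * Ps x
                                    + logder F x * Dr Ps x))) * cpow lam (n + 1 - i))).
  2:{ intros i Hi. destruct (HBF i ltac:(lia)) as [[Bi _] _].
      destruct (bdiff_props i ltac:(lia)) as [_ Di].
      rewrite (is_Cderive_Dr _ _ (is_Cderive_plus _ _ _ _ (Csmooth_is_Cderive_Dr _ (proj1 Bi)) Di)),
        (is_Cderive_Dr _ _ (is_Cderive_dbar1 _ _ (proj1 GPs) PsS)).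
      reflexivity. }
  eapply lax_t_algebra; [apply Fnz | reflexivity | reflexivity | apply dbar_sums_identity
                        | apply lenard_sums_F | apply bdiff_csum_n2 | apply dbar_sources_identity].
Qed.

End Eigenfunction.

Variable bb : nat -> R -> C.
Hypothesis Hbb0 : bb 0%nat = (fun _ => 0).
Hypothesis Hbb1 : bb 1%nat = (fun _ => 1).
Hypothesis Hb1 : b 1%nat = (fun _ => 1).
Hypothesis Hbbrec : forall k, (S k <= n + 1)%nat ->
  bb (S (S k)) = fun x => - (1/4) * Dr (Dr (bb (S k))) x - ubar1 U F x * bb (S k) x
                          + (1/2) * pinv1 (fun y => Dr (ubar1 U F) y * bb (S k) y) x.

Lemma bseq_ubar1 i : (i <= n + 2)%nat ->
  bb i = fun x => b i x + bdiff U (logder F) b xi i x.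
Proof.
  induction i as [|[|k] IHi]; intros Hi.
  - rewrite Hbb0, Hb0. apply functional_extensionality; intros; simpl; ring.
  - rewrite Hbb1, Hb1. apply functional_extensionality; intros x. simpl. rewrite Hb0, !Dr_const. ring.
  - rewrite (Hbbrec k), IHi by lia. apply functional_extensionality, lenard_ubar1; lia.
Qed.

End Darboux.

Lemma schrodinger_scal lam U P c : Csmooth P -> schrodinger lam U P ->
  schrodinger lam U (fun x => c * P x).
Proof.
  intros SP PS x.
  assert (H1 := Csmooth_is_Cderive_Dr _ SP). assert (H2 := is_Cderive_Dr_schrodinger _ _ _ SP PS).
  rewrite (is_Cderive_Dr_fun (fun x => c * P x) _ ltac:(auto_Cderive)).
  rewrite (is_Cderive_Dr (fun x => 0 * P x + c * Dr P x)
             (fun x => c * (- (lam + U x) * P x))); [ring|].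
  eapply is_Cderive_ext; [auto_Cderive|]. intros y; cbv beta; ring.
Qed.

Lemma Qslice_ext_b n N alpha eta (b1 b2 Ph : nat -> R -> C) lam P :
  (forall i, (i < n + 2)%nat -> b1 i = b2 i) ->
  Qslice n N alpha eta b1 Ph lam P = Qslice n N alpha eta b2 Ph lam P.
Proof.
  intros H. apply functional_extensionality; intros x. unfold Qslice.
  f_equal. f_equal. apply csum_ext. intros i Hi. rewrite H; auto.
Qed.

(** * Functions of (x, t) *)

Definition slice (f : fn) (t : R) : R -> C := fun y => f y t.

Lemma Dr_n_slice m : forall f t, Dr_n m (slice f t) = slice (iterD (repeat false m) f) t.
Proof. induction m; intros f t; auto. rewrite Dr_n_S, IHm. reflexivity. Qed.

Lemma Csmooth_slice f t : smooth f -> Csmooth (slice f t).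
Proof.
  intros H m. rewrite Dr_n_slice. intros x.
  destruct (H (repeat false m) x t) as [A [B _]]. split; auto.
Qed.

Lemma is_lim_minfty_0 (h : R -> R) : is_lim h m_infty 0%R ->
  forall eps, (0 < eps)%R -> exists M, forall x, (x < M)%R -> (Rabs (h x) < eps)%R.
Proof.
  intros H eps He. destruct (H (ball 0%R (mkposreal _ He))) as [M HM]; [exists (mkposreal _ He); auto|].
  exists M. intros x Hx. specialize (HM x Hx). unfold ball in HM; simpl in HM.
  unfold AbsRing_ball, abs, minus, plus, opp in HM; simpl in HM.
  replace (h x) with (h x + - 0)%R by ring. auto.
Qed.

Lemma vanishing_of_lims (h : R -> C) : is_lim (fun x => fst (h x)) m_infty 0%R ->
  is_lim (fun x => snd (h x)) m_infty 0%R -> vanishing h.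
Proof.
  intros H1 H2 eps He.
  destruct (is_lim_minfty_0 _ H1 (eps/2)%R) as [M1 HM1]; [lra|].
  destruct (is_lim_minfty_0 _ H2 (eps/2)%R) as [M2 HM2]; [lra|].
  exists (Rmin M1 M2). intros x Hx. destruct (Rmin_lt _ _ _ Hx) as [Hx1 Hx2].
  apply Cmod_lt_of_components; auto.
Qed.

Lemma Cdecaying_slice f t : smooth f -> decays f -> Cdecaying (slice f t).
Proof.
  intros H1 H2. split; [apply Csmooth_slice; auto|]. intros j. rewrite Dr_n_slice.
  destruct (H2 (repeat false j) t). apply vanishing_of_lims; auto.
Qed.

Lemma smooth_dx f : smooth f -> smooth (dx f).
Proof.
  intros H s. assert (E : iterD (s ++ false :: nil)%list f = iterD s (dx f))
    by (induction s; simpl; auto; rewrite IHs; reflexivity).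
  rewrite <- E. apply H.
Qed.

Lemma dt_dx_comm f : smooth f -> forall x t, dt (dx f) x t = dx (dt f) x t.
Proof.
  intros Hs x t. unfold dt, dx, Dr. simpl.
  assert (Hall : forall P : R -> R -> Prop, (forall u v, P u v) -> locally_2d P x t)
    by (intros P HP; exists (mkposreal 1 Rlt_0_1); intros; apply HP).
  f_equal; symmetry; apply Schwarz.
  - apply Hall. intros a b. repeat split;
      [apply (Hs nil a b)|apply (Hs nil a b)|apply (Hs (true :: nil) a b)|apply (Hs (false :: nil) a b)].
  - apply (continuity_2d_pt_ext (fun a b => fst (iterD (false :: true :: nil) f a b)));
      [reflexivity|apply (Hs (false :: true :: nil) x t)].
  - apply (continuity_2d_pt_ext (fun a b => fst (iterD (true :: false :: nil) f a b)));
      [reflexivity|apply (Hs (true :: false :: nil) x t)].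
  - apply Hall. intros a b. repeat split;
      [apply (Hs nil a b)|apply (Hs nil a b)|apply (Hs (true :: nil) a b)|apply (Hs (false :: nil) a b)].
  - apply (continuity_2d_pt_ext (fun a b => snd (iterD (false :: true :: nil) f a b)));
      [reflexivity|apply (Hs (false :: true :: nil) x t)].
  - apply (continuity_2d_pt_ext (fun a b => snd (iterD (true :: false :: nil) f a b)));
      [reflexivity|apply (Hs (true :: false :: nil) x t)].
Qed.

Lemma is_Cderive_t f x : smooth f -> is_Cderive (fun s => f x s) (fun s => dt f x s).
Proof.
  intros Hs s. destruct (Hs nil x s) as [_ [_ [A [B _]]]].
  split; apply Derive_correct; auto.
Qed.

Lemma dt_dbar f1 psi : smooth f1 -> smooth psi -> (forall x t, f1 x t <> 0) -> forall x t,
  dt (dbar f1 psi) x t = dt (dx psi) x t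
    - ((dt (dx f1) x t * / f1 x t + dx f1 x t * (- dt f1 x t / (f1 x t * f1 x t))) * psi x t
       + (dx f1 x t / f1 x t) * dt psi x t).
Proof.
  intros Hf Hp Hnz x t. unfold dt at 1.
  pose proof (is_Cderive_t (dx psi) x (smooth_dx _ Hp)) as H1.
  pose proof (is_Cderive_t (dx f1) x (smooth_dx _ Hf)) as H2.
  pose proof (is_Cderive_t f1 x Hf) as H3.
  pose proof (is_Cderive_t psi x Hp) as H5.
  assert (H4 : is_Cderive (fun s => / f1 x s) (fun s => - dt f1 x s / (f1 x s * f1 x s)))
    by (apply is_Cderive_inv; auto).
  unfold dbar, Cdiv.
  rewrite (is_Cderive_Dr (fun s => dx psi x s - dx f1 x s * / f1 x s * psi x s) _ ltac:(auto_Cderive) t).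
  unfold Cdiv. ring.
Qed.

Lemma dt_ubar u f1 xi1 : smooth u -> smooth f1 -> decays f1 -> (forall x t, f1 x t <> 0) ->
  (forall t, schrodinger xi1 (slice u t) (slice f1 t)) -> forall x t,
  dt (ubar u f1) x t = - dt u x t
    - 2 * ((dt (dx f1) x t * / f1 x t + dx f1 x t * (- dt f1 x t / (f1 x t * f1 x t))) * (dx f1 x t / f1 x t)
           + (dx f1 x t / f1 x t) * (dt (dx f1) x t * / f1 x t + dx f1 x t * (- dt f1 x t / (f1 x t * f1 x t)))).
Proof.
  intros Hu Hf Hfd Hnz FS x t. unfold dt at 1.
  replace (fun s => ubar u f1 x s)
    with (fun s => - u x s - 2 * xi1 - 2 * ((dx f1 x s * / f1 x s) * (dx f1 x s * / f1 x s))).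
  2:{ apply functional_extensionality; intros s.
      change (ubar u f1 x s) with (ubar1 (slice u s) (slice f1 s) x).
      rewrite (ubar1_riccati (slice u s) (slice f1 s) xi1 (Cdecaying_slice f1 s Hf Hfd)
                (fun y => Hnz y s) (FS s)).
      reflexivity. }
  pose proof (is_Cderive_t (dx f1) x (smooth_dx _ Hf)) as H2.
  pose proof (is_Cderive_t f1 x Hf) as H3.
  pose proof (is_Cderive_t u x Hu) as H5.
  assert (H4 : is_Cderive (fun s => / f1 x s) (fun s => - dt f1 x s / (f1 x s * f1 x s)))
    by (apply is_Cderive_inv; auto).
  rewrite (is_Cderive_Dr (fun s => - u x s - 2 * xi1 - 2 * ((dx f1 x s * / f1 x s) * (dx f1 x s * / f1 x s)))
             _ ltac:(auto_Cderive) t).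
  unfold Cdiv. ring.
Qed.

Section Slices.

Variables (n N : nat) (alpha eta xi1 : C) (lams r : nat -> C) (u f1 : fn) (phi : nat -> fn).
Hypothesis Hne : forall j, (j < N)%nat -> lams j <> xi1.
Hypothesis Hr : forall j, (j < N)%nat -> r j * r j = lams j - xi1.
Hypothesis Hu : smooth u.
Hypothesis Hud : decays u.
Hypothesis Hphi : forall j, (j < N)%nat -> smooth (phi j) /\ decays (phi j).
Hypothesis Hf1 : smooth f1.
Hypothesis Hf1d : decays f1.
Hypothesis Hf1nz : forall x t, f1 x t <> 0.
Hypothesis Hcu : forall k, (k <= n + 1)%nat -> pinv_conv (fun y s => dx u y s * bseq u k y s).
Hypothesis Hcub1 : pinv_conv (fun y s => dx (ubar u f1) y s * bseq (ubar u f1) 1 y s).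
Hypothesis Hkdv : KdVSCS n N alpha lams u phi.
Hypothesis Hlax1 : LaxPair n N alpha eta u phi xi1 f1.

Lemma slice_schrodinger_f1 t : schrodinger xi1 (slice u t) (slice f1 t).
Proof. intros x. apply (proj1 Hlax1 x t). Qed.

Lemma slice_ubar_conv t : pinv1_conv (Dr (ubar1 (slice u t) (slice f1 t))).
Proof.
  intros x. apply (ex_RInt_gen_ext_eq (fun y => dx (ubar u f1) y t * bseq (ubar u f1) 1 y t)).
  - intros y. apply Cmult_1_r.
  - apply Hcub1.
Qed.

Lemma slice_bseq_props t : bseq_props n (slice u t) (fun i => slice (bseq u i) t).
Proof.
  apply bseq_props_of_recursion; try reflexivity.
  - apply Cdecaying_slice; auto.
  - intros k Hk x. apply (Hcu k Hk x t).
Qed.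

Lemma slice_sources t : forall j, (j < N)%nat ->
  Cdecaying (slice (phi j) t) /\ schrodinger (lams j) (slice u t) (slice (phi j) t)
  /\ lams j <> xi1 /\ r j * r j = lams j - xi1.
Proof.
  intros j Hj. destruct (Hphi j Hj) as [S1 D1].
  split; [apply Cdecaying_slice; auto|].
  split; [intros x; apply (proj2 Hkdv j Hj x t)|auto].
Qed.

Lemma slice_bseq_ubar t i : (i <= n + 2)%nat ->
  slice (bseq (ubar u f1) i) t
  = fun x => slice (bseq u i) t x
             + bdiff (slice u t) (logder (slice f1 t)) (fun i => slice (bseq u i) t) xi1 i x.
Proof.
  intros Hi.
  refine (bseq_ubar1 (slice u t) (slice f1 t) xi1 _ _ _ (slice_schrodinger_f1 t) (slice_ubar_conv t)
            n _ (slice_bseq_props t) eq_refl (fun i => slice (bseq (ubar u f1) i) t)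
            eq_refl eq_refl eq_refl (fun k Hk => eq_refl) i Hi);
    [apply Cdecaying_slice; auto | apply Cdecaying_slice; auto | intros x; apply Hf1nz].
Qed.

Lemma ubar_kdv : forall x t, dt (ubar u f1) x t =
  dx (fun y s => - 2 * bseq (ubar u f1) (n + 2) y s
                 - 2 * alpha * csum N (fun j => phibar f1 r phi j y s * phibar f1 r phi j y s)) x t.
Proof.
  intros x t.
  rewrite (dt_ubar u f1 xi1 Hu Hf1 Hf1d Hf1nz slice_schrodinger_f1 x t), (proj1 Hkdv x t),
    (dt_dx_comm f1 Hf1 x t).
  replace (dt f1) with (Qop n N alpha eta u phi xi1 f1)
    by (symmetry; do 2 (apply functional_extensionality; intro); apply (proj2 Hlax1)).
  match goal with |- _ = ?R => change R with
    (Dr (kdv_flux N alpha (slice (bseq (ubar u f1) (n + 2)) t)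
                          (fun j y => / r j * dbar1 (slice f1 t) (slice (phi j) t) y)) x) end.
  rewrite slice_bseq_ubar by lia.
  exact (ubar1_evolution (slice u t) (slice f1 t) xi1 (Cdecaying_slice u t Hu Hud)
           (Cdecaying_slice f1 t Hf1 Hf1d) (fun y => Hf1nz y t) (slice_schrodinger_f1 t)
           (slice_ubar_conv t) n _ (slice_bseq_props t) eq_refl N (fun j => slice (phi j) t) lams r
           alpha eta (slice_sources t) x).
Qed.

Lemma phibar_schrodinger j : (j < N)%nat -> forall x t,
  dx (dx (phibar f1 r phi j)) x t + (lams j + ubar u f1 x t) * phibar f1 r phi j x t = 0.
Proof.
  intros Hj x t. destruct (slice_sources t j Hj) as [GP [PS _]].
  exact (schrodinger_scal _ _ _ (/ r j)
           (Csmooth_dbar1 (slice u t) (slice f1 t) xi1 (Cdecaying_slice u t Hu Hud)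
              (Cdecaying_slice f1 t Hf1 Hf1d) (fun y => Hf1nz y t) (slice_schrodinger_f1 t) _ (proj1 GP))
           (dbar1_schrodinger (slice u t) (slice f1 t) xi1 (Cdecaying_slice u t Hu Hud)
              (Cdecaying_slice f1 t Hf1 Hf1d) (fun y => Hf1nz y t) (slice_schrodinger_f1 t) _ _
              (proj1 GP) PS) x).
Qed.

Lemma dbar_lax_pair lam psi : smooth psi -> decays psi ->
  (forall j, (j < N)%nat -> pinv_conv (fun y s => phi j y s * psi y s)) ->
  LaxPair n N alpha eta u phi lam psi ->
  LaxPair n N alpha eta (ubar u f1) (phibar f1 r phi) lam (dbar f1 psi).
Proof.
  intros Hps Hpd Hpc [Hpsis Hpsit].
  assert (GU := fun t => Cdecaying_slice u t Hu Hud).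
  assert (GF := fun t => Cdecaying_slice f1 t Hf1 Hf1d).
  split; intros x t.
  - exact (dbar1_schrodinger (slice u t) (slice f1 t) xi1 (GU t) (GF t) (fun y => Hf1nz y t)
             (slice_schrodinger_f1 t) lam (slice psi t) (Csmooth_slice psi t Hps) (fun y => Hpsis y t) x).
  - rewrite (dt_dbar f1 psi Hf1 Hps Hf1nz x t), (dt_dx_comm psi Hps x t), (dt_dx_comm f1 Hf1 x t).
    replace (dt psi) with (Qop n N alpha eta u phi lam psi)
      by (symmetry; do 2 (apply functional_extensionality; intro); apply Hpsit).
    replace (dt f1) with (Qop n N alpha eta u phi xi1 f1)
      by (symmetry; do 2 (apply functional_extensionality; intro); apply (proj2 Hlax1)).
    match goal with |- _ = ?R => change R with
      (Qslice n N alpha eta (fun i => slice (bseq (ubar u f1) i) t)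
         (fun j y => / r j * dbar1 (slice f1 t) (slice (phi j) t) y) lam
         (dbar1 (slice f1 t) (slice psi t)) x) end.
    rewrite (Qslice_ext_b n N alpha eta _ (fun i y => slice (bseq u i) t y
               + bdiff (slice u t) (logder (slice f1 t)) (fun i => slice (bseq u i) t) xi1 i y))
      by (intros i Hi; apply slice_bseq_ubar; lia).
    exact (dbar1_evolution (slice u t) (slice f1 t) xi1 (GU t) (GF t) (fun y => Hf1nz y t)
             (slice_schrodinger_f1 t) (slice_ubar_conv t) n _ (slice_bseq_props t) eq_refl
             N (fun j => slice (phi j) t) lams r alpha eta (slice_sources t) lam (slice psi t)
             (Cdecaying_slice psi t Hps Hpd) (fun y => Hpsis y t) (fun j Hj y => Hpc j Hj y t) x).
Qed.

End Slices.

Theorem proposition4p1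
  (n N : nat) (alpha eta xi1 : C) (lams : nat -> C) (r : nat -> C)
  (u f1 : fn) (phi : nat -> fn)
  (* distinct constants lambda_j *)
  (Hdist : forall i j, (i < N)%nat -> (j < N)%nat -> i <> j -> lams i <> lams j)
  (* r j is a square root sqrt(lambda_j - xi1), lambda_j <> xi1 *)
  (Hne : forall j, (j < N)%nat -> lams j <> xi1)
  (Hr : forall j, (j < N)%nat -> r j * r j = lams j - xi1)
  (* standing assumptions: smooth, decaying functions *)
  (Hu : smooth u) (Hud : decays u)
  (Hphi : forall j, (j < N)%nat -> smooth (phi j) /\ decays (phi j))
  (Hf1 : smooth f1) (Hf1d : decays f1)
  (Hf1nz : forall x t, f1 x t <> 0)
  (* all integrals d^{-1}(.) appearing converge *)
  (Hcu : forall k, (k <= n + 1)%nat -> pinv_conv (fun y s => dx u y s * bseq u k y s))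
  (Hcub : forall k, (k <= n + 1)%nat ->
     pinv_conv (fun y s => dx (ubar u f1) y s * bseq (ubar u f1) k y s))
  (Hcf : forall j, (j < N)%nat -> pinv_conv (fun y s => phi j y s * f1 y s))
  (* (u, phi) solves the n-th KdV equation with self-consistent sources *)
  (Hkdv : KdVSCS n N alpha lams u phi)
  (* f1 solves the Lax pair with lambda = xi1 *)
  (Hlax1 : LaxPair n N alpha eta u phi xi1 f1) :
  (forall (lam : C) (psi : fn),
     smooth psi -> decays psi ->
     (forall j, (j < N)%nat -> pinv_conv (fun y s => phi j y s * psi y s)) ->
     (forall j, (j < N)%nat ->
        pinv_conv (fun y s => phibar f1 r phi j y s * dbar f1 psi y s)) ->
     LaxPair n N alpha eta u phi lam psi ->
     LaxPair n N alpha eta (ubar u f1) (phibar f1 r phi) lam (dbar f1 psi))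
  /\ KdVSCS n N alpha lams (ubar u f1) (phibar f1 r phi).
Proof.
  assert (Hcub1 := Hcub 1%nat ltac:(lia)).
  split; [|split].
  - intros lam psi Hps Hpd Hpc _. apply (dbar_lax_pair n N alpha eta xi1 lams r u f1 phi); auto.
  - apply (ubar_kdv n N alpha eta xi1 lams r u f1 phi); auto.
  - apply (phibar_schrodinger n N alpha eta xi1 lams r u f1 phi); auto.
Qed.
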